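(* Let $\lambda_1,\lambda_2>0$, $u^*>0$, $\varepsilon>0$ and $\beta>\frac{\varepsilon}{4(1+\varepsilon)}$. Consider the planar system $$\dot\eta_1=u^*-u-\phi_2(\eta_2),\qquad \dot\eta_2=u^*-u+\phi_1(\eta_1)$$ under the feedback law $u=u^*+\beta\big(\phi_1(\eta_1)+(1+\varepsilon)\phi_2(\eta_2)\big)$. Then the equilibrium $\eta=0$ of the closed-loop system is globally asymptotically stable and locally exponentially stable, and along every closed-loop solution the control signal $u(t)$ is bounded (but not necessarily positive). Moreover, if $r>0$ is such that the sublevel set $\Omega=\{\eta\in\mathbb R^2: V_1(\eta)\le r\}$ is contained in $$\mathcal D_0=\{\eta\in\mathbb R^2:\ u^*+\beta(\phi_1(\eta_1)+(1+\varepsilon)\phi_2(\eta_2))>0\},$$ then $u(t)>0$ for all $t\ge0$ for every solution with $\eta(0)\in\Omega$.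
   Context: $\phi_1(\eta_1)=\frac1{\lambda_1}(1-e^{-\eta_1})$, $\phi_2(\eta_2)=\lambda_2(e^{\eta_2}-1)$, $\Phi_1(\eta_1)=\frac1{\lambda_1}(e^{-\eta_1}-1+\eta_1)$, $\Phi_2(\eta_2)=\lambda_2(e^{\eta_2}-1-\eta_2)$, and $V_1(\eta)=\Phi_1(\eta_1)+(1+\varepsilon)\Phi_2(\eta_2)$. *)

From Stdlib Require Import Reals.
From Coquelicot Require Import Coquelicot.
Open Scope R_scope.

Definition phi1 (l1 x : R) : R := / l1 * (1 - exp (- x)).
Definition phi2 (l2 x : R) : R := l2 * (exp x - 1).
Definition Phi1 (l1 x : R) : R := / l1 * (exp (- x) - 1 + x).
Definition Phi2 (l2 x : R) : R := l2 * (exp x - 1 - x).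
Definition V1 (l1 l2 eps x1 x2 : R) : R := Phi1 l1 x1 + (1 + eps) * Phi2 l2 x2.

Definition ufb (l1 l2 us eps beta x1 x2 : R) : R :=
  us + beta * (phi1 l1 x1 + (1 + eps) * phi2 l2 x2).

Definition f1 (l1 l2 us eps beta x1 x2 : R) : R :=
  us - ufb l1 l2 us eps beta x1 x2 - phi2 l2 x2.
Definition f2 (l1 l2 us eps beta x1 x2 : R) : R :=
  us - ufb l1 l2 us eps beta x1 x2 + phi1 l1 x1.

Definition norm2 (x1 x2 : R) : R := sqrt (x1 ^ 2 + x2 ^ 2).

Definition is_solution (l1 l2 us eps beta : R) (e1 e2 : R -> R) : Prop :=
  (forall t, 0 < t ->
     is_derive e1 t (f1 l1 l2 us eps beta (e1 t) (e2 t)) /\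
     is_derive e2 t (f2 l1 l2 us eps beta (e1 t) (e2 t))) /\
  filterlim e1 (at_right 0) (locally (e1 0)) /\
  filterlim e2 (at_right 0) (locally (e2 0)).

Definition GAS (l1 l2 us eps beta : R) : Prop :=
  (forall a b : R, exists e1 e2 : R -> R,
     is_solution l1 l2 us eps beta e1 e2 /\ e1 0 = a /\ e2 0 = b) /\
  (forall r, 0 < r -> exists d, 0 < d /\
     forall e1 e2, is_solution l1 l2 us eps beta e1 e2 ->
       norm2 (e1 0) (e2 0) < d -> forall t, 0 <= t -> norm2 (e1 t) (e2 t) < r) /\
  (forall e1 e2, is_solution l1 l2 us eps beta e1 e2 ->
     is_lim (fun t => norm2 (e1 t) (e2 t)) p_infty 0).

Definition LES (l1 l2 us eps beta : R) : Prop :=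
  exists d k a, 0 < d /\ 0 < k /\ 0 < a /\
    forall e1 e2, is_solution l1 l2 us eps beta e1 e2 ->
      norm2 (e1 0) (e2 0) < d -> forall t, 0 <= t ->
        norm2 (e1 t) (e2 t) <= k * norm2 (e1 0) (e2 0) * exp (- a * t).

From Stdlib Require Import Reals Lra Psatz Factorial Classical.
From Coquelicot Require Import Coquelicot.
Open Scope R_scope.

(* V1 is a strict Lyapunov function of the closed loop: along solutions
   dV1/dt = - beta (phi1 + (1 + eps) phi2)^2 + eps phi1 phi2, and beta > eps / (4 (1 + eps))
   makes this quadratic form in (phi1, (1 + eps) phi2) negative definite, so
   dV1/dt <= - mu (phi1^2 + phi2^2).  Since V1 grows linearly at infinity its sublevel sets are
   bounded; this gives global existence (Picard iteration for the vector field truncated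
   outside a sublevel set, which no solution leaves), Lyapunov stability, boundedness of u and
   the invariance of Omega, which keeps u positive.  Where V1 >= delta, phi1^2 + phi2^2 is
   bounded below, so V1 eventually falls below every delta; near 0, V1 and phi1^2 + phi2^2
   are both comparable to |eta|^2, so V1 decays exponentially. *)

(** * Differential inequalities *)

Definition right_continuous0 (g : R -> R) : Prop :=
  filterlim g (at_right 0) (locally (g 0)).

Lemma continuous_right_continuous0 (g : R -> R) :
  continuous g 0 -> right_continuous0 g.
Proof. intros Hg. exact (filterlim_filter_le_1 g (filter_le_within (F := locally 0) _) Hg). Qed.

Lemma right_continuous0_comp (P g : R -> R) :
  continuous P (g 0) -> right_continuous0 g -> right_continuous0 (fun t => P (g t)).
Proof. intros HP Hg. exact (filterlim_comp _ _ _ g P _ _ _ Hg HP). Qed.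

Lemma right_continuous0_plus (f g : R -> R) :
  right_continuous0 f -> right_continuous0 g -> right_continuous0 (fun t => f t + g t).
Proof.
  intros Hf Hg. exact (filterlim_comp_2 f g Rplus Hf Hg (filterlim_plus (f 0) (g 0))).
Qed.

Lemma right_continuous0_mult (f g : R -> R) :
  right_continuous0 f -> right_continuous0 g -> right_continuous0 (fun t => f t * g t).
Proof.
  intros Hf Hg. exact (filterlim_comp_2 f g Rmult Hf Hg (filterlim_mult (f 0) (g 0))).
Qed.

Lemma lipschitz_right_continuous0 (x : R -> R) (C : R) : 0 <= C ->
  (forall u, 0 <= u -> Rabs (x u - x 0) <= C * Rabs (u - 0)) -> right_continuous0 x.
Proof.
  intros HC Hx. apply (proj2 (filterlim_locally (F := at_right 0) x (x 0))).
  intros [eps Heps]. exists (mkposreal _ (Rdiv_lt_0_compat eps (C + 1) Heps ltac:(lra))).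
  intros s Hs Hs0. simpl in Hs. change (Rabs (s - 0) < eps / (C + 1)) in Hs.
  change (Rabs (x s - x 0) < eps).
  eapply Rle_lt_trans; [apply Hx; lra |].
  pose proof (Rabs_pos (s - 0)).
  apply (Rmult_lt_compat_l (C + 1)) in Hs; [| lra].
  replace ((C + 1) * (eps / (C + 1))) with eps in Hs by (field; lra). nra.
Qed.

Lemma mvt_closed (g dg : R -> R) a b :
  a <= b -> (forall s, a <= s <= b -> is_derive g s (dg s)) ->
  exists c, a <= c <= b /\ g b - g a = dg c * (b - a).
Proof.
  intros Hab Hd.
  destruct (MVT_gen g a b dg) as [c [Hc Heq]].
  - intros x Hx. rewrite Rmin_left, Rmax_right in Hx by lra. apply Hd; lra.
  - intros x Hx. rewrite Rmin_left, Rmax_right in Hx by lra.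
    apply continuity_pt_filterlim, (ex_derive_continuous (V := R_NormedModule)).
    exists (dg x). apply Hd; lra.
  - rewrite Rmin_left, Rmax_right in Hc by lra. exists c; split; auto.
Qed.

Lemma le_of_derive_nonneg (g dg : R -> R) a b :
  a <= b -> (forall s, a <= s <= b -> is_derive g s (dg s)) ->
  (forall s, a <= s <= b -> 0 <= dg s) -> g a <= g b.
Proof.
  intros Hab Hd Hpos. destruct (mvt_closed g dg a b Hab Hd) as [c [Hc Heq]].
  assert (0 <= dg c * (b - a)) by (apply Rmult_le_pos; [apply Hpos; lra | lra]).
  lra.
Qed.

Lemma le_of_derive_nonpos (g dg : R -> R) a b :
  a <= b -> (forall s, a <= s <= b -> is_derive g s (dg s)) ->
  (forall s, a <= s <= b -> dg s <= 0) -> g b <= g a.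
Proof.
  intros Hab Hd Hneg.
  enough (- g a <= - g b) by lra.
  apply (le_of_derive_nonneg (fun x => - g x) (fun x => - dg x) a b Hab).
  - intros s Hs. apply (is_derive_opp g s (dg s)), Hd, Hs.
  - intros s Hs. specialize (Hneg s Hs). lra.
Qed.

Lemma abs_sub_le_of_derive_abs_le (g dg : R -> R) u v C :
  (forall s, Rmin u v <= s <= Rmax u v -> is_derive g s (dg s)) ->
  (forall s, Rmin u v <= s <= Rmax u v -> Rabs (dg s) <= C) ->
  Rabs (g v - g u) <= C * Rabs (v - u).
Proof.
  intros Hd Hb. destruct (Rle_dec u v) as [Huv|Huv].
  - rewrite Rmin_left, Rmax_right in Hd, Hb by lra.
    destruct (mvt_closed g dg u v Huv Hd) as [c [Hc ->]].
    rewrite Rabs_mult. apply Rmult_le_compat_r; [apply Rabs_pos | apply Hb; lra].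
  - rewrite Rmin_right, Rmax_left in Hd, Hb by lra.
    destruct (mvt_closed g dg v u ltac:(lra) Hd) as [c [Hc Heq]].
    rewrite <- Rabs_Ropp, Ropp_minus_distr, Heq, <- (Rabs_Ropp (v - u)), Ropp_minus_distr,
      Rabs_mult.
    apply Rmult_le_compat_r; [apply Rabs_pos | apply Hb; lra].
Qed.

Lemma nonincreasing_of_derive_nonpos (g dg : R -> R) :
  (forall t, 0 < t -> is_derive g t (dg t)) -> (forall t, 0 < t -> dg t <= 0) ->
  right_continuous0 g -> forall t, 0 <= t -> g t <= g 0.
Proof.
  intros Hd Hneg Hg t Ht.
  destruct (Rle_or_lt (g t) (g 0)) as [Hle | Hgt]; auto.
  assert (Hdec : forall s, 0 < s <= t -> g t <= g s).
  { intros s Hs. apply (le_of_derive_nonpos g dg s t); try lra;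
      intros x Hx; [apply Hd | apply Hneg]; lra. }
  assert (Hgap : 0 < g t - g 0) by lra.
  assert (Ht0 : 0 < t) by (destruct Ht as [Ht | <-]; lra).
  destruct (proj1 (filterlim_locally (F := at_right 0) g (g 0)) Hg (mkposreal _ Hgap))
    as [d Hnear]; simpl in Hnear. pose proof (cond_pos d).
  set (s := Rmin t (d / 2)).
  assert (Hs : 0 < s <= t) by (unfold s; apply Rmin_case_strong; lra).
  assert (Hsd : s < d) by (unfold s; apply Rmin_case_strong; lra).
  assert (Hball : ball (g 0) (g t - g 0) (g s)).
  { apply Hnear; [| lra].
    change (Rabs (s - 0) < d). rewrite Rminus_0_r, Rabs_right; lra. }
  change (Rabs (g s - g 0) < g t - g 0) in Hball.
  specialize (Hdec s Hs). apply Rabs_def2 in Hball. lra.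
Qed.

Lemma exp_decay_of_derive_le (g dg : R -> R) (k : R) :
  (forall t, 0 < t -> is_derive g t (dg t)) -> (forall t, 0 < t -> dg t <= - k * g t) ->
  right_continuous0 g -> forall t, 0 <= t -> g t <= g 0 * exp (- k * t).
Proof.
  intros Hd Hle Hg t Ht.
  assert (Hmono : g t * exp (k * t) <= g 0 * exp (k * 0)).
  { apply (nonincreasing_of_derive_nonpos (fun s => g s * exp (k * s))
             (fun s => dg s * exp (k * s) + g s * (k * exp (k * s)))); auto.
    - intros s Hs.
      apply (is_derive_mult g (fun s => exp (k * s)) s (dg s) (k * exp (k * s)));
        [apply Hd, Hs | | intros; apply Rmult_comm].
      auto_derive; auto. ring.
    - intros s Hs. specialize (Hle s Hs). pose proof (exp_pos (k * s)). nra.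
    - apply right_continuous0_mult; auto.
      apply continuous_right_continuous0, (ex_derive_continuous (V := R_NormedModule)).
      auto_derive. auto. }
  rewrite Rmult_0_r, exp_0, Rmult_1_r in Hmono.
  assert (Hinv : exp (k * t) * exp (- k * t) = 1)
    by (rewrite <- exp_plus; replace (k * t + - k * t) with 0 by ring; apply exp_0).
  apply (Rmult_le_compat_r (exp (- k * t))) in Hmono; [| left; apply exp_pos].
  rewrite Rmult_assoc, Hinv, Rmult_1_r in Hmono. exact Hmono.
Qed.

Lemma sum_abs_le_of_derive (F1 F2 H dF1 dF2 dH : R -> R) t : 0 <= t ->
  (forall s, 0 <= s <= t -> is_derive F1 s (dF1 s)) ->
  (forall s, 0 <= s <= t -> is_derive F2 s (dF2 s)) ->
  (forall s, 0 <= s <= t -> is_derive H s (dH s)) ->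
  (forall s, 0 <= s <= t -> Rabs (dF1 s) + Rabs (dF2 s) <= dH s) ->
  F1 0 = 0 -> F2 0 = 0 -> H 0 = 0 -> Rabs (F1 t) + Rabs (F2 t) <= H t.
Proof.
  intros Ht D1 D2 D3 Hb E1 E2 E3.
  (* |F1| + |F2| is attained by a combination s1 F1 + s2 F2 with |s1|, |s2| <= 1,
     and H dominates each such combination *)
  assert (Hsigned : forall s1 s2, Rabs s1 <= 1 -> Rabs s2 <= 1 -> s1 * F1 t + s2 * F2 t <= H t).
  { intros s1 s2 Hs1 Hs2.
    enough (H 0 - s1 * F1 0 - s2 * F2 0 <= H t - s1 * F1 t - s2 * F2 t)
      by (rewrite E1, E2, E3 in *; lra).
    apply (le_of_derive_nonneg (fun x => H x - s1 * F1 x - s2 * F2 x)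
             (fun x => dH x - s1 * dF1 x - s2 * dF2 x) 0 t Ht).
    - intros s Hs.
      apply (is_derive_minus (fun x => H x - s1 * F1 x) (fun x => s2 * F2 x) s
               (dH s - s1 * dF1 s) (s2 * dF2 s));
        [apply (is_derive_minus H (fun x => s1 * F1 x) s (dH s) (s1 * dF1 s)); [apply D3, Hs |] |];
        apply (is_derive_scal _ s); [apply D1 | apply D2]; exact Hs.
    - intros s Hs. specialize (Hb s Hs).
      pose proof (Rle_abs (s1 * dF1 s)). pose proof (Rle_abs (s2 * dF2 s)).
      rewrite Rabs_mult in *.
      pose proof (Rabs_pos (dF1 s)). pose proof (Rabs_pos (dF2 s)). nra. }
  assert (Hsign : forall x, exists s, Rabs s <= 1 /\ s * x = Rabs x).
  { intros x. destruct (Rle_or_lt 0 x).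
    - exists 1. rewrite Rabs_R1, (Rabs_right x) by lra. split; lra.
    - exists (-1). rewrite (Rabs_left x) by lra. split; [| ring].
      unfold Rabs; destruct Rcase_abs; lra. }
  destruct (Hsign (F1 t)) as [s1 [Hs1 <-]]. destruct (Hsign (F2 t)) as [s2 [Hs2 <-]].
  apply Hsigned; auto.
Qed.

Lemma cauchy_dominated_cvg (u P : nat -> R) (l : R) :
  (forall n k, Rabs (u (n + k)%nat - u n) <= P (n + k)%nat - P n) -> is_lim_seq P l ->
  is_lim_seq u (real (Lim_seq u)) /\ forall n, Rabs (real (Lim_seq u) - u n) <= l - P n.
Proof.
  intros Hd Hl.
  assert (Hc : ex_finite_lim_seq u).
  { apply ex_lim_seq_cauchy_corr. intros [eps Heps]. simpl.
    apply is_lim_seq_Reals in Hl. destruct (Hl (eps / 2) ltac:(lra)) as [N HN].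
    assert (Hgen : forall p q, (N <= p)%nat -> (p <= q)%nat -> Rabs (u q - u p) < eps).
    { intros p q Hp Hq. replace q with (p + (q - p))%nat by lia.
      eapply Rle_lt_trans; [apply Hd |]. replace (p + (q - p))%nat with q by lia.
      pose proof (HN q ltac:(lia)) as Hq'. pose proof (HN p ltac:(lia)) as Hp'.
      unfold Rdist in *. apply Rabs_def2 in Hq'. apply Rabs_def2 in Hp'. lra. }
    exists N. intros n m Hn Hm. destruct (Nat.le_ge_cases n m).
    - rewrite Rabs_minus_sym. apply Hgen; lia.
    - apply Hgen; lia. }
  destruct Hc as [lu Hlu]. rewrite (is_lim_seq_unique u lu Hlu). split; auto.
  intros n.
  assert (Hle := is_lim_seq_le_loc (fun m => Rabs (u m - u n)) (fun m => P m - P n)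
                   (Rabs (lu - u n)) (l - P n)).
  simpl in Hle. apply Hle.
  - exists n. intros m Hm. replace m with (n + (m - n))%nat by lia. apply Hd.
  - apply (is_lim_seq_abs _ (lu - u n)), is_lim_seq_minus'; auto using is_lim_seq_const.
  - apply is_lim_seq_minus'; auto using is_lim_seq_const.
Qed.

Lemma is_derive_of_remainder_quad (y : R -> R) gs t r C : 0 < r -> 0 <= C ->
  (forall h, Rabs h < r -> Rabs (y (t + h) - y t - h * gs) <= C * h ^ 2) ->
  is_derive y t gs.
Proof.
  intros Hr HC Hrem. apply is_derive_Reals. intros eps Heps.
  assert (Hd0 : 0 < Rmin r (eps / (C + 1)))
    by (apply Rmin_case; [lra | apply Rdiv_lt_0_compat; lra]).
  exists (mkposreal _ Hd0). simpl. intros h Hh0 Hh.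
  assert (Hh1 : Rabs h < r) by (eapply Rlt_le_trans; [apply Hh | apply Rmin_l]).
  assert (Hh2 : Rabs h < eps / (C + 1)) by (eapply Rlt_le_trans; [apply Hh | apply Rmin_r]).
  specialize (Hrem h Hh1). rewrite <- (pow2_abs h) in Hrem.
  replace ((y (t + h) - y t) / h - gs) with ((y (t + h) - y t - h * gs) / h) by (field; auto).
  assert (Hap : 0 < Rabs h) by (apply Rabs_pos_lt; auto).
  unfold Rdiv. rewrite Rabs_mult, Rabs_inv.
  apply (Rmult_lt_reg_r (Rabs h)); auto. rewrite Rmult_assoc, Rinv_l, Rmult_1_r by lra.
  assert (C * Rabs h < eps).
  { apply (Rmult_lt_compat_l (C + 1)) in Hh2; [| lra].
    replace ((C + 1) * (eps / (C + 1))) with eps in Hh2 by (field; lra). nra. }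
  nra.
Qed.

Lemma is_derive_of_approx (Y : nat -> R -> R) (y : R -> R) (g : nat -> R -> R)
    (en : nat -> R) gs t C :
  0 < t -> 0 <= C ->
  (forall n s, is_derive (Y n) s (g n s)) ->
  (forall s, t / 2 <= s <= 3 * t / 2 -> is_lim_seq (fun n => Y n s) (y s)) ->
  is_lim_seq en 0 ->
  (forall n s, t / 2 <= s <= 3 * t / 2 -> Rabs (g n s - gs) <= en n + C * Rabs (s - t)) ->
  is_derive y t gs.
Proof.
  intros Ht HC Hd Hl He Hb.
  apply (is_derive_of_remainder_quad _ _ _ (t / 2) C); auto; [lra |].
  intros h Hh.
  (* the mean value theorem bounds the remainder of each [Y n]; pass to the limit *)
  assert (Hn : forall n, Rabs (Y n (t + h) - Y n t - h * gs) <= (en n + C * Rabs h) * Rabs h).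
  { intros n.
    replace (Y n (t + h) - Y n t - h * gs)
      with (Y n (t + h) - (t + h) * gs - (Y n t - t * gs)) by ring.
    replace (Rabs h) with (Rabs (t + h - t)) at 2 by (f_equal; ring).
    apply (abs_sub_le_of_derive_abs_le (fun s => Y n s - s * gs) (fun s => g n s - gs)).
    - intros s _. apply (is_derive_minus (Y n) (fun s => s * gs)); [apply Hd |].
      auto_derive; auto; ring.
    - intros s Hs.
      assert (Hst : t / 2 <= s <= 3 * t / 2 /\ Rabs (s - t) <= Rabs h).
      { revert Hs. apply Rmin_case; apply Rmax_case; intros;
          unfold Rabs in *; repeat destruct Rcase_abs; lra. }
      eapply Rle_trans; [apply Hb, Hst |].
      pose proof (Rabs_pos h). nra. }
  replace (C * h ^ 2) with ((0 + C * Rabs h) * Rabs h) by (rewrite <- (pow2_abs h); ring).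
  assert (Hle := is_lim_seq_le (fun n => Rabs (Y n (t + h) - Y n t - h * gs))
    (fun n => (en n + C * Rabs h) * Rabs h) (Rabs (y (t + h) - y t - h * gs))
    ((0 + C * Rabs h) * Rabs h) Hn).
  simpl in Hle. apply Hle.
  - apply (is_lim_seq_abs _ (y (t + h) - y t - h * gs)).
    apply is_lim_seq_minus'; [apply is_lim_seq_minus'; apply Hl | apply is_lim_seq_const];
      destruct (Rabs_def2 _ _ Hh); lra.
  - apply (is_lim_seq_mult' _ _ (0 + C * Rabs h) (Rabs h)); [| apply is_lim_seq_const].
    apply is_lim_seq_plus'; auto using is_lim_seq_const.
Qed.

(** * Picard iteration for bounded Lipschitz planar fields *)

Definition lipschitz2 (G : R -> R -> R) (L : R) : Prop :=
  forall x1 x2 y1 y2, Rabs (G x1 x2 - G y1 y2) <= L * (Rabs (x1 - y1) + Rabs (x2 - y2)).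

Lemma continuous_lipschitz2_comp (G : R -> R -> R) L (y1 y2 : R -> R) t :
  0 <= L -> lipschitz2 G L -> continuous y1 t -> continuous y2 t ->
  continuous (fun s => G (y1 s) (y2 s)) t.
Proof.
  intros HL HG H1 H2. apply continuity_pt_filterlim in H1, H2.
  apply continuity_pt_filterlim. intros eps Heps.
  set (e := eps / (2 * L + 2)).
  assert (He : 0 < e) by (apply Rdiv_lt_0_compat; lra).
  destruct (H1 e He) as [d1 [Hd1 K1]]. destruct (H2 e He) as [d2 [Hd2 K2]].
  exists (Rmin d1 d2). split; [apply Rmin_case; lra |]. intros s [_ Hs].
  assert (K1' : Rabs (y1 s - y1 t) < e).
  { destruct (Req_dec s t) as [-> | Hne]; [rewrite Rminus_eq_0, Rabs_R0; lra |].
    apply K1. split; [split; [exact I | auto] |].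
    eapply Rlt_le_trans; [apply Hs | apply Rmin_l]. }
  assert (K2' : Rabs (y2 s - y2 t) < e).
  { destruct (Req_dec s t) as [-> | Hne]; [rewrite Rminus_eq_0, Rabs_R0; lra |].
    apply K2. split; [split; [exact I | auto] |].
    eapply Rlt_le_trans; [apply Hs | apply Rmin_r]. }
  unfold R_dist. eapply Rle_lt_trans; [apply HG |].
  assert (L * (Rabs (y1 s - y1 t) + Rabs (y2 s - y2 t)) <= L * (2 * e))
    by (apply Rmult_le_compat_l; lra).
  assert ((2 * L + 2) * e = eps) by (unfold e; field; lra).
  nra.
Qed.

Lemma is_derive_RInt0 (g : R -> R) (a t : R) :
  (forall s, continuous g s) -> is_derive (fun t => a + RInt g 0 t) t (g t).
Proof.
  intros Hc.
  assert (H : is_derive (fun t => RInt g 0 t) t (g t)).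
  { apply (is_derive_RInt g (fun t => RInt g 0 t) 0 t); [| apply Hc].
    exists (mkposreal 1 Rlt_0_1). intros y _.
    apply (RInt_correct (V := R_CompleteNormedModule)).
    apply (ex_RInt_continuous (V := R_CompleteNormedModule)). intros; apply Hc. }
  rewrite <- (Rplus_0_l (g t)).
  exact (is_derive_plus (fun _ => a) (fun t => RInt g 0 t) t 0 (g t) (is_derive_const a t) H).
Qed.

(* The Picard increments are bounded by the terms of the series of K (exp (Lg t) - 1). *)
Definition picard_bound (K Lg : R) (n : nat) (t : R) : R :=
  K * (Lg * t) ^ S n / INR (fact (S n)).

Lemma picard_bound_nonneg K Lg n t : 0 <= K -> 0 <= Lg -> 0 <= t -> 0 <= picard_bound K Lg n t.
Proof.
  intros. unfold picard_bound.
  apply Rmult_le_pos; [apply Rmult_le_pos; auto; apply pow_le; nra |].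
  left. apply Rinv_0_lt_compat, lt_0_INR, lt_O_fact.
Qed.

Lemma picard_bound_le K Lg n t T :
  0 <= K -> 0 <= Lg -> 0 <= t <= T -> picard_bound K Lg n t <= picard_bound K Lg n T.
Proof.
  intros. unfold picard_bound.
  apply Rmult_le_compat_r; [left; apply Rinv_0_lt_compat, lt_0_INR, lt_O_fact |].
  apply Rmult_le_compat_l; auto. apply pow_incr. split; nra.
Qed.

Lemma is_derive_picard_bound_S K Lg n s :
  is_derive (picard_bound K Lg (S n)) s (Lg * picard_bound K Lg n s).
Proof.
  unfold picard_bound.
  assert (Hf : 0 < INR (fact (S n))) by apply lt_0_INR, lt_O_fact.
  assert (HS : 0 < INR (S (S n))) by (apply lt_0_INR; lia).
  assert (E : INR (fact (S (S n))) = INR (S (S n)) * INR (fact (S n)))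
    by (rewrite fact_simpl, mult_INR; reflexivity).
  replace (Lg * (K * (Lg * s) ^ S n / INR (fact (S n))))
    with (K / INR (fact (S (S n))) * (INR (S (S n)) * Lg * (Lg * s) ^ pred (S (S n))))
    by (rewrite E; simpl pred; field; lra).
  refine (is_derive_ext (fun t => K / INR (fact (S (S n))) * (Lg * t) ^ S (S n)) _ s _ _ _).
  { intros t. change (@eq R (K / INR (fact (S (S n))) * (Lg * t) ^ S (S n))
                            (K * (Lg * t) ^ S (S n) / INR (fact (S (S n))))).
    unfold Rdiv. ring. }
  apply is_derive_scal, (is_derive_pow (fun t => Lg * t)).
  auto_derive; repeat split; ring.
Qed.

Lemma is_derive_picard_bound_0 K Lg s : is_derive (picard_bound K Lg 0) s (K * Lg).
Proof.
  unfold picard_bound. simpl fact. auto_derive; auto.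
  match goal with |- ?A = ?B => change (@eq R A B) end. simpl. field.
Qed.

Definition exp_partial_sum (y : R) (n : nat) : R :=
  sum_n (fun j => scal (pow_n y j) (/ INR (fact j))) n.

Definition picard_tail (K Lg T : R) (n : nat) : R := K * (exp_partial_sum (Lg * T) n - 1).

Lemma picard_tail_S K Lg T n :
  picard_tail K Lg T (S n) - picard_tail K Lg T n = picard_bound K Lg n T.
Proof.
  unfold picard_tail, picard_bound, exp_partial_sum.
  rewrite sum_Sn, pow_n_pow. change plus with Rplus. change scal with Rmult. unfold Rdiv. ring.
Qed.

Lemma is_lim_seq_picard_tail K Lg T :
  is_lim_seq (picard_tail K Lg T) (K * (exp (Lg * T) - 1)).
Proof.
  apply (is_lim_seq_mult' (fun _ => K)); [apply is_lim_seq_const |].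
  apply is_lim_seq_minus'; [exact (is_exp_Reals (Lg * T)) | apply is_lim_seq_const].
Qed.

Section Picard.

Variables (G1 G2 : R -> R -> R) (L B a b : R).
Hypotheses (HL : 0 <= L) (HB : 0 <= B) (HG1 : lipschitz2 G1 L) (HG2 : lipschitz2 G2 L)
  (HG1b : forall x1 x2, Rabs (G1 x1 x2) <= B) (HG2b : forall x1 x2, Rabs (G2 x1 x2) <= B).

Fixpoint picard (n : nat) : (R -> R) * (R -> R) :=
  match n with
  | O => (fun _ => a, fun _ => b)
  | S n => (fun t => a + RInt (fun s => G1 (fst (picard n) s) (snd (picard n) s)) 0 t,
            fun t => b + RInt (fun s => G2 (fst (picard n) s) (snd (picard n) s)) 0 t)
  end.

Let iter1 n := fst (picard n).
Let iter2 n := snd (picard n).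

Lemma picard_continuous n t : continuous (iter1 n) t /\ continuous (iter2 n) t.
Proof.
  revert t. unfold iter1, iter2. induction n as [| n IH]; intros t; simpl.
  - split; apply continuous_const.
  - split; apply (ex_derive_continuous (V := R_NormedModule)); eexists;
      apply is_derive_RInt0; intros s;
      apply (continuous_lipschitz2_comp _ L); auto; apply IH.
Qed.

Lemma is_derive_picard n t :
  is_derive (iter1 (S n)) t (G1 (iter1 n t) (iter2 n t)) /\
  is_derive (iter2 (S n)) t (G2 (iter1 n t) (iter2 n t)).
Proof.
  split; [apply (is_derive_RInt0 (fun s => G1 (iter1 n s) (iter2 n s)))
         | apply (is_derive_RInt0 (fun s => G2 (iter1 n s) (iter2 n s)))];
    intros s; apply (continuous_lipschitz2_comp _ L); auto; apply picard_continuous.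
Qed.

Lemma picard_at0 n : iter1 n 0 = a /\ iter2 n 0 = b.
Proof.
  destruct n; unfold iter1, iter2; simpl; auto.
  rewrite !RInt_point. unfold zero; simpl. split; ring.
Qed.

Let Lg := 2 * L + 1.
Let K := 2 * B / Lg.

Lemma picard_increment_le n t : 0 <= t ->
  Rabs (iter1 (S n) t - iter1 n t) + Rabs (iter2 (S n) t - iter2 n t) <= picard_bound K Lg n t.
Proof.
  assert (HLg : 0 < Lg) by (unfold Lg; lra).
  assert (HK : 0 <= K) by (unfold K; apply Rdiv_le_0_compat; lra).
  assert (Hbound0 : forall n, picard_bound K Lg n 0 = 0)
    by (intros; unfold picard_bound; rewrite Rmult_0_r, pow_i by lia; unfold Rdiv; ring).
  revert t; induction n as [| n IH]; intros t Ht.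
  - apply (sum_abs_le_of_derive (fun s => iter1 1 s - iter1 0 s) (fun s => iter2 1 s - iter2 0 s)
             (picard_bound K Lg 0) (fun s => G1 (iter1 0 s) (iter2 0 s) - 0)
             (fun s => G2 (iter1 0 s) (iter2 0 s) - 0) (fun _ => K * Lg)); auto.
    + intros s _. apply (is_derive_minus (iter1 1) (iter1 0) s _ 0);
        [apply is_derive_picard | exact (is_derive_const a s)].
    + intros s _. apply (is_derive_minus (iter2 1) (iter2 0) s _ 0);
        [apply is_derive_picard | exact (is_derive_const b s)].
    + intros s _. apply is_derive_picard_bound_0.
    + intros s _. rewrite !Rminus_0_r.
      replace (K * Lg) with (2 * B) by (unfold K; field; lra).
      specialize (HG1b a b). specialize (HG2b a b). unfold iter1, iter2; simpl. lra.
    + destruct (picard_at0 1) as [-> _]. destruct (picard_at0 0) as [-> _]. ring.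
    + destruct (picard_at0 1) as [_ ->]. destruct (picard_at0 0) as [_ ->]. ring.
  - apply (sum_abs_le_of_derive (fun s => iter1 (S (S n)) s - iter1 (S n) s)
      (fun s => iter2 (S (S n)) s - iter2 (S n) s) (picard_bound K Lg (S n))
      (fun s => G1 (iter1 (S n) s) (iter2 (S n) s) - G1 (iter1 n s) (iter2 n s))
      (fun s => G2 (iter1 (S n) s) (iter2 (S n) s) - G2 (iter1 n s) (iter2 n s))
      (fun s => Lg * picard_bound K Lg n s)); auto.
    + intros s _. apply (is_derive_minus (iter1 (S (S n))) (iter1 (S n)) s); apply is_derive_picard.
    + intros s _. apply (is_derive_minus (iter2 (S (S n))) (iter2 (S n)) s); apply is_derive_picard.
    + intros s _. apply is_derive_picard_bound_S.
    + intros s Hs. specialize (IH s ltac:(lra)).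
      eapply Rle_trans; [apply Rplus_le_compat; [apply HG1 | apply HG2] |].
      pose proof (Rabs_pos (iter1 (S n) s - iter1 n s)).
      pose proof (Rabs_pos (iter2 (S n) s - iter2 n s)).
      pose proof (picard_bound_nonneg K Lg n s HK ltac:(lra) ltac:(lra)).
      unfold Lg in *. nra.
    + destruct (picard_at0 (S (S n))) as [-> _]. destruct (picard_at0 (S n)) as [-> _]. ring.
    + destruct (picard_at0 (S (S n))) as [_ ->]. destruct (picard_at0 (S n)) as [_ ->]. ring.
Qed.

Lemma picard_tail_le T t n k : 0 <= t <= T ->
  Rabs (iter1 (n + k) t - iter1 n t) + Rabs (iter2 (n + k) t - iter2 n t)
  <= picard_tail K Lg T (n + k) - picard_tail K Lg T n.
Proof.
  intros Ht.
  assert (HK : 0 <= K) by (unfold K, Lg; apply Rdiv_le_0_compat; lra).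
  induction k as [| k IH].
  - rewrite Nat.add_0_r, !Rminus_eq_0, Rabs_R0. lra.
  - rewrite Nat.add_succ_r.
    pose proof (picard_increment_le (n + k) t ltac:(lra)).
    pose proof (picard_bound_le K Lg (n + k) t T HK ltac:(unfold Lg; lra) Ht).
    pose proof (picard_tail_S K Lg T (n + k)).
    assert (Htri : forall u v w : R, Rabs (u - w) <= Rabs (u - v) + Rabs (v - w))
      by (intros u v w; replace (u - w) with ((u - v) + (v - w)) by ring; apply Rabs_triang).
    pose proof (Htri (iter1 (S (n + k)) t) (iter1 (n + k) t) (iter1 n t)).
    pose proof (Htri (iter2 (S (n + k)) t) (iter2 (n + k) t) (iter2 n t)).
    lra.
Qed.

Lemma picard_time_lipschitz n u v :
  Rabs (iter1 n u - iter1 n v) <= B * Rabs (u - v) /\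
  Rabs (iter2 n u - iter2 n v) <= B * Rabs (u - v).
Proof.
  destruct n as [| n].
  - unfold iter1, iter2; simpl. rewrite !Rminus_eq_0, Rabs_R0.
    pose proof (Rabs_pos (u - v)). split; nra.
  - split; [apply (abs_sub_le_of_derive_abs_le _ (fun s => G1 (iter1 n s) (iter2 n s)))
           | apply (abs_sub_le_of_derive_abs_le _ (fun s => G2 (iter1 n s) (iter2 n s)))];
      intros s _; auto; apply is_derive_picard.
Qed.

Let lim1 t := real (Lim_seq (fun n => iter1 n t)).
Let lim2 t := real (Lim_seq (fun n => iter2 n t)).

Lemma picard_cvg T t : 0 <= t <= T ->
  (is_lim_seq (fun n => iter1 n t) (lim1 t) /\
   forall n, Rabs (lim1 t - iter1 n t) <= K * (exp (Lg * T) - 1) - picard_tail K Lg T n) /\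
  (is_lim_seq (fun n => iter2 n t) (lim2 t) /\
   forall n, Rabs (lim2 t - iter2 n t) <= K * (exp (Lg * T) - 1) - picard_tail K Lg T n).
Proof.
  intros Ht.
  split; apply cauchy_dominated_cvg; auto using is_lim_seq_picard_tail; intros n k;
    pose proof (picard_tail_le T t n k Ht);
    pose proof (Rabs_pos (iter1 (n + k) t - iter1 n t));
    pose proof (Rabs_pos (iter2 (n + k) t - iter2 n t)); lra.
Qed.

Lemma picard_lim_lipschitz u v : 0 <= u -> 0 <= v ->
  Rabs (lim1 u - lim1 v) <= B * Rabs (u - v) /\ Rabs (lim2 u - lim2 v) <= B * Rabs (u - v).
Proof.
  intros Hu Hv.
  destruct (picard_cvg u u ltac:(lra)) as [[Lu1 _] [Lu2 _]].
  destruct (picard_cvg v v ltac:(lra)) as [[Lv1 _] [Lv2 _]].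
  split.
  - assert (Hle := is_lim_seq_le (fun n => Rabs (iter1 n u - iter1 n v)) (fun _ => B * Rabs (u - v))
                     (Rabs (lim1 u - lim1 v)) (B * Rabs (u - v))).
    apply Hle; [intros n; apply picard_time_lipschitz | | apply is_lim_seq_const].
    apply (is_lim_seq_abs _ (lim1 u - lim1 v)), is_lim_seq_minus'; auto.
  - assert (Hle := is_lim_seq_le (fun n => Rabs (iter2 n u - iter2 n v)) (fun _ => B * Rabs (u - v))
                     (Rabs (lim2 u - lim2 v)) (B * Rabs (u - v))).
    apply Hle; [intros n; apply picard_time_lipschitz | | apply is_lim_seq_const].
    apply (is_lim_seq_abs _ (lim2 u - lim2 v)), is_lim_seq_minus'; auto.
Qed.

Lemma picard_lim_at0 : lim1 0 = a /\ lim2 0 = b.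
Proof.
  unfold lim1, lim2. split.
  - rewrite (Lim_seq_ext _ (fun _ => a) (fun n => proj1 (picard_at0 n))), Lim_seq_const.
    reflexivity.
  - rewrite (Lim_seq_ext _ (fun _ => b) (fun n => proj2 (picard_at0 n))), Lim_seq_const.
    reflexivity.
Qed.

Lemma picard_near_lim t s n : 0 <= s <= 2 * t ->
  Rabs (iter1 n s - lim1 t) + Rabs (iter2 n s - lim2 t)
  <= 2 * (K * (exp (Lg * (2 * t)) - 1) - picard_tail K Lg (2 * t) n) + 2 * B * Rabs (s - t).
Proof.
  intros Hs.
  destruct (picard_cvg (2 * t) s Hs) as [[_ T1] [_ T2]].
  destruct (picard_lim_lipschitz s t ltac:(lra) ltac:(lra)) as [L1 L2].
  specialize (T1 n). specialize (T2 n).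
  assert (Htri : forall u v w : R, Rabs (u - w) <= Rabs (v - u) + Rabs (v - w)).
  { intros u v w. replace (u - w) with (- (v - u) + (v - w)) by ring.
    rewrite <- (Rabs_Ropp (v - u)). apply Rabs_triang. }
  pose proof (Htri (iter1 n s) (lim1 s) (lim1 t)). pose proof (Htri (iter2 n s) (lim2 s) (lim2 t)).
  lra.
Qed.

Lemma is_derive_picard_lim t : 0 < t ->
  is_derive lim1 t (G1 (lim1 t) (lim2 t)) /\ is_derive lim2 t (G2 (lim1 t) (lim2 t)).
Proof.
  intros Ht.
  set (en := fun n => L * (2 * (K * (exp (Lg * (2 * t)) - 1) - picard_tail K Lg (2 * t) n))).
  assert (Hen : is_lim_seq en 0).
  { rewrite <- (Rmult_0_r L), <- (Rmult_0_r 2), <- (Rminus_diag (K * (exp (Lg * (2 * t)) - 1))).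
    apply (is_lim_seq_mult' (fun _ => L)); [apply is_lim_seq_const |].
    apply (is_lim_seq_mult' (fun _ => 2)); [apply is_lim_seq_const |].
    apply is_lim_seq_minus'; [apply is_lim_seq_const | apply is_lim_seq_picard_tail]. }
  assert (Hlim : forall s, t / 2 <= s <= 3 * t / 2 ->
            is_lim_seq (fun n => iter1 (S n) s) (lim1 s) /\
            is_lim_seq (fun n => iter2 (S n) s) (lim2 s)).
  { intros s Hs. destruct (picard_cvg s s ltac:(lra)) as [[C1 _] [C2 _]].
    split; [apply (is_lim_seq_incr_1 (fun n => iter1 n s))
           | apply (is_lim_seq_incr_1 (fun n => iter2 n s))]; assumption. }
  assert (Hnear : forall n s, t / 2 <= s <= 3 * t / 2 ->
            L * (Rabs (iter1 n s - lim1 t) + Rabs (iter2 n s - lim2 t))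
            <= en n + 2 * L * B * Rabs (s - t)).
  { intros n s Hs. unfold en.
    pose proof (Rmult_le_compat_l L _ _ HL (picard_near_lim t s n ltac:(lra))). lra. }
  assert (HC : 0 <= 2 * L * B) by nra.
  split.
  - apply (is_derive_of_approx (fun n => iter1 (S n)) lim1
             (fun n s => G1 (iter1 n s) (iter2 n s)) en _ t (2 * L * B)); auto.
    + intros n s. apply is_derive_picard.
    + intros s Hs. apply Hlim, Hs.
    + intros n s Hs. eapply Rle_trans; [apply HG1 | apply Hnear, Hs].
  - apply (is_derive_of_approx (fun n => iter2 (S n)) lim2
             (fun n s => G2 (iter1 n s) (iter2 n s)) en _ t (2 * L * B)); auto.
    + intros n s. apply is_derive_picard.
    + intros s Hs. apply Hlim, Hs.
    + intros n s Hs. eapply Rle_trans; [apply HG2 | apply Hnear, Hs].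
Qed.

Theorem picard_solution :
  exists x1 x2 : R -> R, x1 0 = a /\ x2 0 = b /\
    right_continuous0 x1 /\ right_continuous0 x2 /\
    forall t, 0 < t -> is_derive x1 t (G1 (x1 t) (x2 t)) /\ is_derive x2 t (G2 (x1 t) (x2 t)).
Proof.
  exists lim1, lim2. destruct picard_lim_at0 as [E1 E2].
  split; [exact E1 | split; [exact E2 |]].
  split; [| split; [| exact is_derive_picard_lim]];
    apply (lipschitz_right_continuous0 _ B HB); intros u Hu; apply picard_lim_lipschitz; lra.
Qed.

End Picard.

(** * Elementary bounds on the exponential *)

Lemma exp_le_exp x y : x <= y -> exp x <= exp y.
Proof. intros [H | ->]; [left; apply exp_increasing, H | lra]. Qed.

Lemma exp_lipschitz_on u v B : Rabs u <= B -> Rabs v <= B ->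
  Rabs (exp u - exp v) <= exp B * Rabs (u - v).
Proof.
  intros Hu Hv. apply Rabs_le_between in Hu, Hv.
  apply (abs_sub_le_of_derive_abs_le exp exp v u).
  - intros s _. apply is_derive_exp.
  - intros s Hs. rewrite Rabs_right by (left; apply exp_pos).
    apply exp_le_exp. revert Hs. apply Rmin_case; apply Rmax_case; lra.
Qed.

Lemma exp_remainder_ge_quad y : -2 <= y -> y ^ 2 / 4 <= exp y - 1 - y.
Proof.
  intros H.
  (* exp y = exp (y/2)^2 >= (1 + y/2)^2 when 1 + y/2 >= 0 *)
  replace (exp y) with (exp (y / 2) * exp (y / 2)) by (rewrite <- exp_plus; f_equal; field).
  pose proof (exp_ineq1_le (y / 2)). assert (0 <= 1 + y / 2) by lra. nra.
Qed.

Lemma exp_remainder_ge_abs y : Rabs y - 1 <= exp y - 1 - y.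
Proof.
  destruct (Rle_or_lt 0 y).
  - rewrite Rabs_right by lra. pose proof (exp_remainder_ge_quad y ltac:(lra)).
    pose proof (pow2_ge_0 (y / 2 - 1)). nra.
  - rewrite Rabs_left by lra. pose proof (exp_pos y). lra.
Qed.

Lemma exp_remainder_ge_min y : Rmin (y ^ 2) 1 / 4 <= exp y - 1 - y.
Proof.
  pose proof (Rmin_l (y ^ 2) 1). pose proof (Rmin_r (y ^ 2) 1).
  destruct (Rle_or_lt (-2) y) as [Hy | Hy].
  - pose proof (exp_remainder_ge_quad y Hy). lra.
  - pose proof (exp_remainder_ge_abs y). rewrite Rabs_left in * by lra. lra.
Qed.

Lemma exp_remainder_le_quad y : Rabs y <= 1 -> exp y - 1 - y <= exp 1 * y ^ 2.
Proof.
  intros Hy. apply Rabs_le_between in Hy.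
  pose proof (exp_ineq1_le (- y)). pose proof (exp_ineq1_le y).
  assert (He : exp y * exp (- y) = 1) by (rewrite <- exp_plus, Rplus_opp_r; apply exp_0).
  pose proof (exp_pos y). pose proof (exp_pos (- y)).
  (* from exp (-y) >= 1 - y: exp y - 1 <= y exp y *)
  assert (exp y - 1 <= y * exp y) by nra.
  assert (exp y <= exp 1) by (apply exp_le_exp; lra).
  assert (1 <= exp 1) by (rewrite <- exp_0 at 1; apply exp_le_exp; lra).
  assert (exp y - 1 - y <= y * (exp y - 1)) by nra.
  destruct (Rle_or_lt 0 y).
  - assert (y * (exp y - 1) <= y * (y * exp y)) by (apply Rmult_le_compat_l; lra).
    assert (y * y * exp y <= y * y * exp 1) by (apply Rmult_le_compat_l; nra).
    nra.
  - assert (y * (exp y - 1) <= y * y) by nra. nra.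
Qed.

Lemma Rabs_exp_sub1_ge y : Rabs y <= 1 -> Rabs y * exp (-1) <= Rabs (exp y - 1).
Proof.
  intros Hy. apply Rabs_le_between in Hy.
  pose proof (exp_ineq1_le y). pose proof (exp_ineq1_le (- y)).
  assert (exp (-1) <= 1) by (rewrite <- exp_0; apply exp_le_exp; lra).
  pose proof (exp_pos (-1)).
  destruct (Rle_or_lt 0 y).
  - rewrite !Rabs_right by lra. nra.
  - assert (exp y <= 1) by (rewrite <- exp_0; apply exp_le_exp; lra).
    rewrite Rabs_left, Rabs_left1 by lra.
    assert (He : exp y * exp (- y) = 1) by (rewrite <- exp_plus, Rplus_opp_r; apply exp_0).
    assert (exp (-1) <= exp y) by (apply exp_le_exp; lra).
    nra.
Qed.

Lemma Rabs_exp_sub1_ge_far r y : 0 < r -> r <= Rabs y -> 1 - exp (- r) <= Rabs (exp y - 1).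
Proof.
  intros Hr Hy. pose proof (exp_ineq1_le (- r)). pose proof (exp_ineq1_le y).
  destruct (Rle_or_lt 0 y).
  - rewrite Rabs_right in Hy by lra. rewrite Rabs_right by lra. lra.
  - rewrite Rabs_left in Hy by lra.
    assert (exp y <= exp (- r)) by (apply exp_le_exp; lra).
    assert (exp (- r) <= 1) by (rewrite <- exp_0; apply exp_le_exp; lra).
    rewrite Rabs_left1 by lra. lra.
Qed.

(** * Bounded Lipschitz functions of two variables *)

Definition bounded_lipschitz2 (G : R -> R -> R) : Prop :=
  exists L B, 0 <= L /\ lipschitz2 G L /\ forall x1 x2, Rabs (G x1 x2) <= B.

Lemma bounded_lipschitz2_const c : bounded_lipschitz2 (fun _ _ => c).
Proof.
  exists 0, (Rabs c). repeat split; [lra | intros x1 x2 y1 y2 | intros; lra].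
  rewrite Rminus_eq_0, Rabs_R0, Rmult_0_l. lra.
Qed.

Lemma bounded_lipschitz2_plus F G :
  bounded_lipschitz2 F -> bounded_lipschitz2 G ->
  bounded_lipschitz2 (fun x1 x2 => F x1 x2 + G x1 x2).
Proof.
  intros [L1 [B1 [HL1 [Hl1 Hb1]]]] [L2 [B2 [HL2 [Hl2 Hb2]]]].
  exists (L1 + L2), (B1 + B2). repeat split; [lra | intros x1 x2 y1 y2 | intros x1 x2].
  - specialize (Hl1 x1 x2 y1 y2). specialize (Hl2 x1 x2 y1 y2).
    replace (F x1 x2 + G x1 x2 - (F y1 y2 + G y1 y2))
      with ((F x1 x2 - F y1 y2) + (G x1 x2 - G y1 y2)) by ring.
    eapply Rle_trans; [apply Rabs_triang | lra].
  - eapply Rle_trans; [apply Rabs_triang |]. specialize (Hb1 x1 x2). specialize (Hb2 x1 x2). lra.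
Qed.

Lemma bounded_lipschitz2_mult F G :
  bounded_lipschitz2 F -> bounded_lipschitz2 G ->
  bounded_lipschitz2 (fun x1 x2 => F x1 x2 * G x1 x2).
Proof.
  intros [L1 [B1 [HL1 [Hl1 Hb1]]]] [L2 [B2 [HL2 [Hl2 Hb2]]]].
  assert (HB1 : 0 <= B1) by (eapply Rle_trans; [apply Rabs_pos | apply (Hb1 0 0)]).
  assert (HB2 : 0 <= B2) by (eapply Rle_trans; [apply Rabs_pos | apply (Hb2 0 0)]).
  exists (L1 * B2 + B1 * L2), (B1 * B2). repeat split; [nra | intros x1 x2 y1 y2 | intros x1 x2].
  - replace (F x1 x2 * G x1 x2 - F y1 y2 * G y1 y2)
      with ((F x1 x2 - F y1 y2) * G x1 x2 + F y1 y2 * (G x1 x2 - G y1 y2)) by ring.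
    eapply Rle_trans; [apply Rabs_triang |]. rewrite !Rabs_mult.
    specialize (Hl1 x1 x2 y1 y2). specialize (Hl2 x1 x2 y1 y2).
    specialize (Hb1 y1 y2). specialize (Hb2 x1 x2).
    set (D := Rabs (x1 - y1) + Rabs (x2 - y2)) in *.
    assert (Rabs (F x1 x2 - F y1 y2) * Rabs (G x1 x2) <= L1 * D * B2)
      by (apply Rmult_le_compat; auto using Rabs_pos).
    assert (Rabs (F y1 y2) * Rabs (G x1 x2 - G y1 y2) <= B1 * (L2 * D))
      by (apply Rmult_le_compat; auto using Rabs_pos).
    nra.
  - rewrite Rabs_mult. apply Rmult_le_compat; auto using Rabs_pos.
Qed.

Lemma bounded_lipschitz2_comp (h : R -> R) (C : R) G : 0 <= C ->
  (forall u v, Rabs (h u - h v) <= C * Rabs (u - v)) ->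
  bounded_lipschitz2 G -> bounded_lipschitz2 (fun x1 x2 => h (G x1 x2)).
Proof.
  intros HC Hh [L [B [HL [Hl Hb]]]].
  exists (C * L), (Rabs (h 0) + C * B). repeat split; [nra | intros x1 x2 y1 y2 | intros x1 x2].
  - rewrite Rmult_assoc. eapply Rle_trans; [apply Hh | apply Rmult_le_compat_l, Hl; lra].
  - replace (h (G x1 x2)) with (h 0 + (h (G x1 x2) - h 0)) by ring.
    eapply Rle_trans; [apply Rabs_triang |]. apply Rplus_le_compat_l.
    eapply Rle_trans; [apply Hh |]. rewrite Rminus_0_r. apply Rmult_le_compat_l, Hb; lra.
Qed.

Lemma bounded_lipschitz2_opp G :
  bounded_lipschitz2 G -> bounded_lipschitz2 (fun x1 x2 => - G x1 x2).
Proof.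
  apply (bounded_lipschitz2_comp Ropp 1); [lra |].
  intros u v. rewrite Rmult_1_l, <- Rabs_Ropp. right. f_equal. ring.
Qed.

Lemma bounded_lipschitz2_minus F G :
  bounded_lipschitz2 F -> bounded_lipschitz2 G ->
  bounded_lipschitz2 (fun x1 x2 => F x1 x2 - G x1 x2).
Proof.
  intros HF HG. exact (bounded_lipschitz2_plus F _ HF (bounded_lipschitz2_opp G HG)).
Qed.

Lemma bounded_lipschitz2_exp G :
  bounded_lipschitz2 G -> bounded_lipschitz2 (fun x1 x2 => exp (G x1 x2)).
Proof.
  intros [L [B [HL [Hl Hb]]]]. pose proof (exp_pos B).
  exists (exp B * L), (exp B). repeat split; [nra | intros x1 x2 y1 y2 | intros x1 x2].
  - rewrite Rmult_assoc. eapply Rle_trans; [apply exp_lipschitz_on; apply Hb |].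
    apply Rmult_le_compat_l, Hl; lra.
  - rewrite Rabs_right by (left; apply exp_pos).
    apply exp_le_exp. specialize (Hb x1 x2). apply Rabs_le_between in Hb. lra.
Qed.

Lemma bounded_lipschitz2_common G1 G2 :
  bounded_lipschitz2 G1 -> bounded_lipschitz2 G2 ->
  exists L B, 0 <= L /\ 0 <= B /\ lipschitz2 G1 L /\ lipschitz2 G2 L /\
    (forall x1 x2, Rabs (G1 x1 x2) <= B) /\ (forall x1 x2, Rabs (G2 x1 x2) <= B).
Proof.
  intros [L1 [B1 [HL1 [Hl1 Hb1]]]] [L2 [B2 [HL2 [Hl2 Hb2]]]].
  exists (Rmax L1 L2), (Rmax B1 B2).
  pose proof (Rmax_l L1 L2). pose proof (Rmax_r L1 L2).
  pose proof (Rmax_l B1 B2). pose proof (Rmax_r B1 B2).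
  pose proof (Rabs_pos (G1 0 0)). pose proof (Hb1 0 0).
  assert (Hlip : forall G L, lipschitz2 G L -> L <= Rmax L1 L2 -> lipschitz2 G (Rmax L1 L2)).
  { intros G L HG HLe x1 x2 y1 y2. eapply Rle_trans; [apply HG |].
    pose proof (Rabs_pos (x1 - y1)). pose proof (Rabs_pos (x2 - y2)).
    apply Rmult_le_compat_r; lra. }
  repeat split; try lra; try (apply (Hlip _ _ Hl1) || apply (Hlip _ _ Hl2); lra);
    intros x1 x2; [specialize (Hb1 x1 x2) | specialize (Hb2 x1 x2)]; lra.
Qed.

Definition clamp (M x : R) : R := Rmax (- M) (Rmin M x).

Lemma clamp_id M x : Rabs x <= M -> clamp M x = x.
Proof.
  intros HM. apply Rabs_le_between in HM. unfold clamp, Rmax, Rmin. repeat destruct Rle_dec; lra.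
Qed.

Lemma Rabs_clamp_out M x : 0 <= M -> M < Rabs x -> Rabs (clamp M x) = M.
Proof.
  intros HM H. unfold clamp, Rmax, Rmin, Rabs in *.
  repeat destruct Rle_dec; repeat destruct Rcase_abs; lra.
Qed.

Lemma bounded_lipschitz2_clamp_fst M : 0 <= M -> bounded_lipschitz2 (fun x1 _ => clamp M x1).
Proof.
  intros HM. exists 1, M. repeat split; [lra | intros x1 x2 y1 y2 | intros x1 x2].
  - pose proof (Rabs_pos (x2 - y2)). unfold clamp, Rmax, Rmin, Rabs in *.
    repeat destruct Rle_dec; repeat destruct Rcase_abs; lra.
  - unfold clamp, Rmax, Rmin, Rabs. repeat destruct Rle_dec; repeat destruct Rcase_abs; lra.
Qed.

Lemma bounded_lipschitz2_clamp_snd M : 0 <= M -> bounded_lipschitz2 (fun _ x2 => clamp M x2).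
Proof.
  intros HM. exists 1, M. repeat split; [lra | intros x1 x2 y1 y2 | intros x1 x2].
  - pose proof (Rabs_pos (x1 - y1)). unfold clamp, Rmax, Rmin, Rabs in *.
    repeat destruct Rle_dec; repeat destruct Rcase_abs; lra.
  - unfold clamp, Rmax, Rmin, Rabs. repeat destruct Rle_dec; repeat destruct Rcase_abs; lra.
Qed.

Definition cutoff (c v : R) : R := Rmax 0 (Rmin 1 (c - v)).

Lemma cutoff_nonneg c v : 0 <= cutoff c v.
Proof. apply Rmax_l. Qed.

Lemma cutoff_one c v : v <= c - 1 -> cutoff c v = 1.
Proof. intros. unfold cutoff, Rmax, Rmin. repeat destruct Rle_dec; lra. Qed.

Lemma cutoff_zero c v : c <= v -> cutoff c v = 0.
Proof. intros. unfold cutoff, Rmax, Rmin. repeat destruct Rle_dec; lra. Qed.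

Lemma bounded_lipschitz2_cutoff c G :
  bounded_lipschitz2 G -> bounded_lipschitz2 (fun x1 x2 => cutoff c (G x1 x2)).
Proof.
  apply (bounded_lipschitz2_comp (cutoff c) 1); [lra |]. intros u v.
  unfold cutoff, Rmax, Rmin, Rabs. repeat destruct Rle_dec; repeat destruct Rcase_abs; lra.
Qed.

(** * The Euclidean norm and the storage function V1 *)

Lemma Rabs_le_norm2_l x1 x2 : Rabs x1 <= norm2 x1 x2.
Proof.
  unfold norm2. rewrite <- sqrt_Rsqr_abs. apply sqrt_le_1_alt.
  unfold Rsqr. pose proof (pow2_ge_0 x2). simpl. nra.
Qed.

Lemma Rabs_le_norm2_r x1 x2 : Rabs x2 <= norm2 x1 x2.
Proof.
  unfold norm2. rewrite <- sqrt_Rsqr_abs. apply sqrt_le_1_alt.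
  unfold Rsqr. pose proof (pow2_ge_0 x1). simpl. nra.
Qed.

Lemma norm2_sq x1 x2 : norm2 x1 x2 ^ 2 = x1 ^ 2 + x2 ^ 2.
Proof.
  unfold norm2. apply pow2_sqrt. pose proof (pow2_ge_0 x1). pose proof (pow2_ge_0 x2). lra.
Qed.

Lemma norm2_lt x1 x2 r : Rabs x1 < r / 2 -> Rabs x2 < r / 2 -> norm2 x1 x2 < r.
Proof.
  intros H1 H2. pose proof (Rabs_pos x1). pose proof (Rabs_pos x2).
  unfold norm2. rewrite <- (sqrt_pow2 r) by lra. apply sqrt_lt_1_alt.
  rewrite <- (pow2_abs x1), <- (pow2_abs x2).
  pose proof (pow2_ge_0 (Rabs x1)). pose proof (pow2_ge_0 (Rabs x2)).
  split; [lra |]. simpl. nra.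
Qed.

Section LyapunovFunction.

Variables (l1 l2 eps : R).
Hypotheses (Hl1 : 0 < l1) (Hl2 : 0 < l2) (Heps : 0 < eps).

Lemma Phi1_eq x : Phi1 l1 x = / l1 * (exp (- x) - 1 - - x).
Proof. unfold Phi1. ring. Qed.

Lemma Phi1_nonneg x : 0 <= Phi1 l1 x.
Proof.
  rewrite Phi1_eq. pose proof (exp_ineq1_le (- x)).
  apply Rmult_le_pos; [left; apply Rinv_0_lt_compat |]; lra.
Qed.

Lemma Phi2_nonneg x : 0 <= Phi2 l2 x.
Proof. unfold Phi2. pose proof (exp_ineq1_le x). apply Rmult_le_pos; lra. Qed.

Lemma Phi1_le_V1 x1 x2 : Phi1 l1 x1 <= V1 l1 l2 eps x1 x2.
Proof. unfold V1. pose proof (Phi2_nonneg x2). nra. Qed.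

Lemma Phi2_le_V1 x1 x2 : Phi2 l2 x2 <= V1 l1 l2 eps x1 x2.
Proof. unfold V1. pose proof (Phi1_nonneg x1). pose proof (Phi2_nonneg x2). nra. Qed.

Lemma V1_nonneg x1 x2 : 0 <= V1 l1 l2 eps x1 x2.
Proof. pose proof (Phi1_le_V1 x1 x2). pose proof (Phi1_nonneg x1). lra. Qed.

Lemma V1_sublevel_bounded c x1 x2 : V1 l1 l2 eps x1 x2 <= c ->
  Rabs x1 <= 1 + l1 * c /\ Rabs x2 <= 1 + c / l2.
Proof.
  intros Hc. pose proof (Phi1_le_V1 x1 x2). pose proof (Phi2_le_V1 x1 x2).
  pose proof (exp_remainder_ge_abs (- x1)). pose proof (exp_remainder_ge_abs x2).
  rewrite Rabs_Ropp in *. split.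
  - assert (Rabs x1 - 1 <= l1 * Phi1 l1 x1)
      by (rewrite Phi1_eq, <- Rmult_assoc, Rinv_r, Rmult_1_l by lra; lra).
    assert (l1 * Phi1 l1 x1 <= l1 * c) by (apply Rmult_le_compat_l; lra). lra.
  - assert (Rabs x2 - 1 <= Phi2 l2 x2 / l2)
      by (unfold Phi2; replace (l2 * (exp x2 - 1 - x2) / l2) with (exp x2 - 1 - x2)
            by (field; lra); lra).
    assert (Phi2 l2 x2 / l2 <= c / l2)
      by (apply Rmult_le_compat_r; [left; apply Rinv_0_lt_compat |]; lra). lra.
Qed.

Lemma V1_quad_const_pos : 0 < exp 1 / l1 + (1 + eps) * (l2 * exp 1).
Proof.
  pose proof (exp_pos 1). assert (0 < exp 1 / l1) by (apply Rdiv_lt_0_compat; lra).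
  assert (0 < l2 * exp 1) by (apply Rmult_lt_0_compat; lra).
  assert (0 < (1 + eps) * (l2 * exp 1)) by (apply Rmult_lt_0_compat; lra).
  lra.
Qed.

Lemma V1_le_quad x1 x2 : Rabs x1 <= 1 -> Rabs x2 <= 1 ->
  V1 l1 l2 eps x1 x2 <= (exp 1 / l1 + (1 + eps) * (l2 * exp 1)) * (x1 ^ 2 + x2 ^ 2).
Proof.
  intros H1 H2. unfold V1.
  pose proof (exp_remainder_le_quad (- x1) ltac:(rewrite Rabs_Ropp; lra)).
  pose proof (exp_remainder_le_quad x2 H2).
  pose proof (pow2_ge_0 x1). pose proof (pow2_ge_0 x2). pose proof (exp_pos 1).
  assert (Phi1 l1 x1 <= exp 1 / l1 * x1 ^ 2).
  { rewrite Phi1_eq.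
    replace (exp 1 / l1 * x1 ^ 2) with (/ l1 * (exp 1 * (- x1) ^ 2)) by (field; lra).
    apply Rmult_le_compat_l; [left; apply Rinv_0_lt_compat |]; lra. }
  assert (Phi2 l2 x2 <= l2 * exp 1 * x2 ^ 2)
    by (unfold Phi2; rewrite Rmult_assoc; apply Rmult_le_compat_l; lra).
  assert (0 < exp 1 / l1) by (apply Rdiv_lt_0_compat; lra).
  assert ((1 + eps) * Phi2 l2 x2 <= (1 + eps) * (l2 * exp 1 * x2 ^ 2))
    by (apply Rmult_le_compat_l; lra).
  assert (0 <= exp 1 / l1 * x2 ^ 2) by (apply Rmult_le_pos; lra).
  assert (0 <= (1 + eps) * (l2 * exp 1) * x1 ^ 2)
    by (apply Rmult_le_pos; [apply Rmult_le_pos; [| apply Rmult_le_pos] |]; lra).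
  nra.
Qed.

Lemma V1_ge_quad x1 x2 : Rabs x1 <= 1 -> Rabs x2 <= 1 ->
  Rmin (/ (4 * l1)) (l2 / 4) * (x1 ^ 2 + x2 ^ 2) <= V1 l1 l2 eps x1 x2.
Proof.
  intros H1 H2. apply Rabs_le_between in H1, H2. unfold V1.
  pose proof (exp_remainder_ge_quad (- x1) ltac:(lra)).
  pose proof (exp_remainder_ge_quad x2 ltac:(lra)).
  pose proof (pow2_ge_0 x1). pose proof (pow2_ge_0 x2). pose proof (Phi2_nonneg x2).
  pose proof (Rmin_l (/ (4 * l1)) (l2 / 4)). pose proof (Rmin_r (/ (4 * l1)) (l2 / 4)).
  set (m := Rmin (/ (4 * l1)) (l2 / 4)) in *.
  assert (x1 ^ 2 / (4 * l1) <= Phi1 l1 x1).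
  { rewrite Phi1_eq. replace (x1 ^ 2 / (4 * l1)) with (/ l1 * ((- x1) ^ 2 / 4)) by (field; lra).
    apply Rmult_le_compat_l; [left; apply Rinv_0_lt_compat |]; lra. }
  assert (l2 * (x2 ^ 2 / 4) <= Phi2 l2 x2) by (apply Rmult_le_compat_l; lra).
  assert (m * x1 ^ 2 <= x1 ^ 2 / (4 * l1))
    by (unfold Rdiv; rewrite (Rmult_comm (x1 ^ 2)); apply Rmult_le_compat_r; auto).
  nra.
Qed.

Lemma V1_small_near0 delta : 0 < delta ->
  exists d, 0 < d <= 1 /\ forall x1 x2, Rabs x1 < d -> Rabs x2 < d -> V1 l1 l2 eps x1 x2 < delta.
Proof.
  intros Hd. pose proof V1_quad_const_pos as HC.
  set (C := exp 1 / l1 + (1 + eps) * (l2 * exp 1)) in *.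
  set (d := Rmin 1 (delta / (2 * C + 1))).
  assert (Hd1 : d <= 1) by apply Rmin_l.
  assert (Hd2 : d <= delta / (2 * C + 1)) by apply Rmin_r.
  assert (Hdpos : 0 < d) by (apply Rmin_case; [lra | apply Rdiv_lt_0_compat; lra]).
  exists d. split; [lra |]. intros x1 x2 H1 H2.
  pose proof (V1_le_quad x1 x2 ltac:(lra) ltac:(lra)) as Hq. fold C in Hq.
  rewrite <- (pow2_abs x1), <- (pow2_abs x2) in Hq.
  pose proof (Rabs_pos x1). pose proof (Rabs_pos x2).
  assert (C * (2 * d) < delta).
  { apply (Rmult_le_compat_l (2 * C)) in Hd2; [| lra].
    replace (2 * C * (delta / (2 * C + 1))) with (delta - delta / (2 * C + 1)) in Hd2
      by (field; lra).
    assert (0 < delta / (2 * C + 1)) by (apply Rdiv_lt_0_compat; lra). lra. }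
  assert (Rabs x1 ^ 2 < d) by (simpl; nra). assert (Rabs x2 ^ 2 < d) by (simpl; nra).
  nra.
Qed.

Lemma V1_small_bounds rho : 0 < rho <= 1 ->
  exists delta, 0 < delta /\
    forall x1 x2, V1 l1 l2 eps x1 x2 < delta -> Rabs x1 < rho /\ Rabs x2 < rho.
Proof.
  intros Hr. assert (Hr2 : 0 < rho ^ 2) by (apply pow_lt; lra).
  exists (Rmin (rho ^ 2 / (4 * l1)) (l2 * (rho ^ 2 / 4))). split.
  { apply Rmin_case; [apply Rdiv_lt_0_compat | apply Rmult_lt_0_compat]; lra. }
  intros x1 x2 Hv. pose proof (Phi1_le_V1 x1 x2). pose proof (Phi2_le_V1 x1 x2).
  pose proof (Rmin_l (rho ^ 2 / (4 * l1)) (l2 * (rho ^ 2 / 4))).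
  pose proof (Rmin_r (rho ^ 2 / (4 * l1)) (l2 * (rho ^ 2 / 4))).
  assert (Hmin : forall x, rho <= Rabs x -> rho ^ 2 <= Rmin (x ^ 2) 1).
  { intros x Hx. apply Rmin_glb; [rewrite <- (pow2_abs x); apply pow_incr; lra | simpl; nra]. }
  split.
  - destruct (Rlt_or_le (Rabs x1) rho) as [| Hx]; auto. exfalso.
    pose proof (exp_remainder_ge_min (- x1)). replace ((- x1) ^ 2) with (x1 ^ 2) in * by ring.
    assert (rho ^ 2 / (4 * l1) <= Phi1 l1 x1).
    { rewrite Phi1_eq. replace (rho ^ 2 / (4 * l1)) with (/ l1 * (rho ^ 2 / 4)) by (field; lra).
      apply Rmult_le_compat_l; [left; apply Rinv_0_lt_compat; lra |].
      pose proof (Hmin x1 Hx). lra. }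
    lra.
  - destruct (Rlt_or_le (Rabs x2) rho) as [| Hx]; auto. exfalso.
    pose proof (exp_remainder_ge_min x2). pose proof (Hmin x2 Hx).
    assert (l2 * (rho ^ 2 / 4) <= Phi2 l2 x2) by (unfold Phi2; apply Rmult_le_compat_l; lra).
    lra.
Qed.

Lemma norm2_le_of_V1_le : exists c, 0 < c /\ forall x1 x2 y1 y2 E,
  Rabs x1 <= 1 -> Rabs x2 <= 1 -> Rabs y1 <= 1 -> Rabs y2 <= 1 -> 0 <= E ->
  V1 l1 l2 eps x1 x2 <= V1 l1 l2 eps y1 y2 * E ^ 2 -> norm2 x1 x2 <= c * norm2 y1 y2 * E.
Proof.
  set (Clow := Rmin (/ (4 * l1)) (l2 / 4)).
  pose proof V1_quad_const_pos as HCup.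
  set (Cup := exp 1 / l1 + (1 + eps) * (l2 * exp 1)) in *.
  assert (HClow : 0 < Clow) by (apply Rmin_case; [apply Rinv_0_lt_compat |]; lra).
  assert (HCC : 0 < Cup / Clow) by (apply Rdiv_lt_0_compat; lra).
  (* near 0, Clow |x|^2 <= V1 x <= Cup |x|^2, and (1 + Cup / Clow)^2 >= Cup / Clow *)
  exists (1 + Cup / Clow). split; [lra |].
  intros x1 x2 y1 y2 E H1 H2 H3 H4 HE HV.
  assert (Hc2 : Cup <= Clow * (1 + Cup / Clow) ^ 2)
    by (assert (Clow * (Cup / Clow) = Cup) by (field; lra); nra).
  pose proof (V1_ge_quad x1 x2 H1 H2) as Hlow. pose proof (V1_le_quad y1 y2 H3 H4) as Hup.
  fold Clow in Hlow. fold Cup in Hup. rewrite <- norm2_sq in Hlow, Hup.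
  assert (0 <= norm2 x1 x2) by apply sqrt_pos. assert (0 <= norm2 y1 y2) by apply sqrt_pos.
  set (c := 1 + Cup / Clow) in *. set (Nx := norm2 x1 x2) in *. set (Ny := norm2 y1 y2) in *.
  assert (Clow * Nx ^ 2 <= Clow * (c * Ny * E) ^ 2).
  { assert (V1 l1 l2 eps y1 y2 * E ^ 2 <= Cup * Ny ^ 2 * E ^ 2)
      by (apply Rmult_le_compat_r; [apply pow2_ge_0 | lra]).
    assert (Cup * Ny ^ 2 * E ^ 2 <= Clow * c ^ 2 * Ny ^ 2 * E ^ 2)
      by (apply Rmult_le_compat_r; [apply pow2_ge_0 |];
          apply Rmult_le_compat_r; [apply pow2_ge_0 | lra]).
    replace (Clow * (c * Ny * E) ^ 2) with (Clow * c ^ 2 * Ny ^ 2 * E ^ 2) by ring.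
    lra. }
  assert (Nx ^ 2 <= (c * Ny * E) ^ 2) by (apply (Rmult_le_reg_l Clow); auto).
  assert (0 <= c * Ny * E) by (apply Rmult_le_pos; [apply Rmult_le_pos |]; unfold c; lra).
  simpl in *. nra.
Qed.

End LyapunovFunction.

Lemma phi1_sq l1 x : 0 < l1 -> phi1 l1 x ^ 2 = Rabs (exp (- x) - 1) ^ 2 / l1 ^ 2.
Proof. intros. rewrite pow2_abs. unfold phi1. field. lra. Qed.

Lemma phi2_sq l2 x : phi2 l2 x ^ 2 = l2 ^ 2 * Rabs (exp x - 1) ^ 2.
Proof. rewrite pow2_abs. unfold phi2. ring. Qed.

Lemma phi_sq_ge_quad l1 l2 x1 x2 : 0 < l1 -> 0 < l2 -> Rabs x1 <= 1 -> Rabs x2 <= 1 ->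
  Rmin ((exp (-1) / l1) ^ 2) ((l2 * exp (-1)) ^ 2) * (x1 ^ 2 + x2 ^ 2)
  <= phi1 l1 x1 ^ 2 + phi2 l2 x2 ^ 2.
Proof.
  intros Hl1 Hl2 H1 H2.
  pose proof (Rabs_exp_sub1_ge (- x1) ltac:(rewrite Rabs_Ropp; lra)) as E1.
  pose proof (Rabs_exp_sub1_ge x2 H2) as E2. rewrite Rabs_Ropp in E1.
  pose proof (exp_pos (-1)). pose proof (Rabs_pos x1). pose proof (Rabs_pos x2).
  assert (P1 : (Rabs x1 * exp (-1)) ^ 2 <= Rabs (exp (- x1) - 1) ^ 2) by (apply pow_incr; nra).
  assert (P2 : (Rabs x2 * exp (-1)) ^ 2 <= Rabs (exp x2 - 1) ^ 2) by (apply pow_incr; nra).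
  rewrite phi1_sq, phi2_sq by lra.
  rewrite Rpow_mult_distr, pow2_abs in P1, P2.
  pose proof (Rmin_l ((exp (-1) / l1) ^ 2) ((l2 * exp (-1)) ^ 2)).
  pose proof (Rmin_r ((exp (-1) / l1) ^ 2) ((l2 * exp (-1)) ^ 2)).
  set (m := Rmin _ _) in *.
  assert (Hl12 : 0 < l1 ^ 2) by (apply pow_lt; lra).
  assert (m * x1 ^ 2 <= x1 ^ 2 * exp (-1) ^ 2 / l1 ^ 2).
  { replace (x1 ^ 2 * exp (-1) ^ 2 / l1 ^ 2) with ((exp (-1) / l1) ^ 2 * x1 ^ 2) by (field; lra).
    apply Rmult_le_compat_r; [apply pow2_ge_0 | lra]. }
  assert (m * x2 ^ 2 <= l2 ^ 2 * (x2 ^ 2 * exp (-1) ^ 2)).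
  { replace (l2 ^ 2 * (x2 ^ 2 * exp (-1) ^ 2)) with ((l2 * exp (-1)) ^ 2 * x2 ^ 2) by ring.
    apply Rmult_le_compat_r; [apply pow2_ge_0 | lra]. }
  assert (x1 ^ 2 * exp (-1) ^ 2 / l1 ^ 2 <= Rabs (exp (- x1) - 1) ^ 2 / l1 ^ 2)
    by (apply Rmult_le_compat_r; [left; apply Rinv_0_lt_compat |]; lra).
  assert (l2 ^ 2 * (x2 ^ 2 * exp (-1) ^ 2) <= l2 ^ 2 * Rabs (exp x2 - 1) ^ 2)
    by (apply Rmult_le_compat_l; [apply pow2_ge_0 | lra]).
  lra.
Qed.

Lemma phi_sq_ge_far l1 l2 d x1 x2 : 0 < l1 -> 0 < l2 -> 0 < d -> d <= Rabs x1 \/ d <= Rabs x2 ->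
  Rmin (((1 - exp (- d)) / l1) ^ 2) ((l2 * (1 - exp (- d))) ^ 2) <= phi1 l1 x1 ^ 2 + phi2 l2 x2 ^ 2.
Proof.
  intros Hl1 Hl2 Hd Hfar.
  assert (0 <= 1 - exp (- d))
    by (pose proof (exp_le_exp (- d) 0 ltac:(lra)); rewrite exp_0 in *; lra).
  pose proof (pow2_ge_0 (phi1 l1 x1)). pose proof (pow2_ge_0 (phi2 l2 x2)).
  pose proof (Rmin_l (((1 - exp (- d)) / l1) ^ 2) ((l2 * (1 - exp (- d))) ^ 2)).
  pose proof (Rmin_r (((1 - exp (- d)) / l1) ^ 2) ((l2 * (1 - exp (- d))) ^ 2)).
  destruct Hfar as [Hfar | Hfar].
  - pose proof (Rabs_exp_sub1_ge_far d (- x1) Hd ltac:(rewrite Rabs_Ropp; lra)).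
    assert (((1 - exp (- d)) / l1) ^ 2 <= phi1 l1 x1 ^ 2).
    { rewrite phi1_sq by lra. unfold Rdiv. rewrite Rpow_mult_distr, pow_inv.
      apply Rmult_le_compat_r; [left; apply Rinv_0_lt_compat, pow_lt; lra |].
      apply pow_incr. lra. }
    lra.
  - pose proof (Rabs_exp_sub1_ge_far d x2 Hd Hfar).
    assert ((l2 * (1 - exp (- d))) ^ 2 <= phi2 l2 x2 ^ 2).
    { rewrite phi2_sq, Rpow_mult_distr.
      apply Rmult_le_compat_l; [apply pow2_ge_0 |]. apply pow_incr. lra. }
    lra.
Qed.

Definition V1_dot (l1 l2 us eps beta x1 x2 : R) : R :=
  phi1 l1 x1 * f1 l1 l2 us eps beta x1 x2 + (1 + eps) * (phi2 l2 x2 * f2 l1 l2 us eps beta x1 x2).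

Lemma is_derive_V1_comp l1 l2 eps (e1 e2 : R -> R) t d1 d2 :
  is_derive e1 t d1 -> is_derive e2 t d2 ->
  is_derive (fun t => V1 l1 l2 eps (e1 t) (e2 t)) t
    (phi1 l1 (e1 t) * d1 + (1 + eps) * (phi2 l2 (e2 t) * d2)).
Proof.
  intros H1 H2. unfold V1, Phi1, Phi2, phi1, phi2. auto_derive.
  - repeat split; solve [exists d1; exact H1 | exists d2; exact H2].
  - replace (Derive (fun x => e1 x) t) with d1 by (symmetry; apply is_derive_unique, H1).
    replace (Derive (fun x => e2 x) t) with d2 by (symmetry; apply is_derive_unique, H2).
    ring.
Qed.

Lemma quadratic_form_coercive beta k a b : 0 < k -> k < 4 * beta ->
  Rmin (k / 2) (2 * beta - k / 2) * (a ^ 2 + b ^ 2) <= beta * (a + b) ^ 2 - k * a * b.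
Proof.
  intros Hk Hkb.
  pose proof (Rmin_l (k / 2) (2 * beta - k / 2)). pose proof (Rmin_r (k / 2) (2 * beta - k / 2)).
  set (m := Rmin _ _) in *.
  pose proof (pow2_ge_0 (a - b)). pose proof (pow2_ge_0 (a + b)).
  pose proof (pow2_ge_0 a). pose proof (pow2_ge_0 b).
  destruct (Rle_or_lt k (2 * beta)).
  - assert (m * (a ^ 2 + b ^ 2) <= k / 2 * (a ^ 2 + b ^ 2)) by (apply Rmult_le_compat_r; lra). nra.
  - assert (m * (a ^ 2 + b ^ 2) <= (2 * beta - k / 2) * (a ^ 2 + b ^ 2))
      by (apply Rmult_le_compat_r; lra). nra.
Qed.

Section Dissipation.

Variables (l1 l2 us eps beta : R).
Hypotheses (Heps : 0 < eps) (Hbeta : eps / (4 * (1 + eps)) < beta).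

Lemma V1_dot_le_phi_sq :
  exists mu, 0 < mu /\ forall x1 x2,
    V1_dot l1 l2 us eps beta x1 x2 <= - mu * (phi1 l1 x1 ^ 2 + phi2 l2 x2 ^ 2).
Proof.
  set (k := eps / (1 + eps)).
  assert (Hk : 0 < k) by (apply Rdiv_lt_0_compat; lra).
  assert (Hkb : k < 4 * beta)
    by (replace k with (4 * (eps / (4 * (1 + eps)))) by (unfold k; field; lra); lra).
  set (m := Rmin (k / 2) (2 * beta - k / 2)).
  assert (Hm : 0 < m) by (apply Rmin_case; lra).
  exists m. split; auto. intros x1 x2.
  pose proof (quadratic_form_coercive beta k (phi1 l1 x1) ((1 + eps) * phi2 l2 x2) Hk Hkb) as Hq.
  fold m in Hq.
  replace (V1_dot l1 l2 us eps beta x1 x2)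
    with (- (beta * (phi1 l1 x1 + (1 + eps) * phi2 l2 x2) ^ 2
             - k * phi1 l1 x1 * ((1 + eps) * phi2 l2 x2)))
    by (unfold V1_dot, f1, f2, ufb, k; field; lra).
  assert (phi2 l2 x2 ^ 2 <= ((1 + eps) * phi2 l2 x2) ^ 2)
    by (rewrite Rpow_mult_distr; pose proof (pow2_ge_0 (phi2 l2 x2)); nra).
  nra.
Qed.

Lemma V1_dot_nonpos x1 x2 : V1_dot l1 l2 us eps beta x1 x2 <= 0.
Proof.
  destruct V1_dot_le_phi_sq as [mu [Hmu Hv]].
  specialize (Hv x1 x2). pose proof (pow2_ge_0 (phi1 l1 x1)). pose proof (pow2_ge_0 (phi2 l2 x2)).
  nra.
Qed.

End Dissipation.

(** * The closed loop *)

Lemma continuous_Phi1 l1 x : continuous (Phi1 l1) x.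
Proof. apply (ex_derive_continuous (V := R_NormedModule)). unfold Phi1. auto_derive; auto. Qed.

Lemma continuous_Phi2 l2 x : continuous (Phi2 l2) x.
Proof. apply (ex_derive_continuous (V := R_NormedModule)). unfold Phi2. auto_derive; auto. Qed.

Lemma right_continuous0_V1 l1 l2 eps (e1 e2 : R -> R) :
  right_continuous0 e1 -> right_continuous0 e2 ->
  right_continuous0 (fun t => V1 l1 l2 eps (e1 t) (e2 t)).
Proof.
  intros H1 H2. unfold V1. apply right_continuous0_plus.
  - apply right_continuous0_comp; [apply continuous_Phi1 | exact H1].
  - apply right_continuous0_mult.
    + apply continuous_right_continuous0, continuous_const.
    + apply right_continuous0_comp; [apply continuous_Phi2 | exact H2].
Qed.

Section ClosedLoop.

Variables (l1 l2 us eps beta : R).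
Hypotheses (Hl1 : 0 < l1) (Hl2 : 0 < l2) (Heps : 0 < eps) (Hbeta : eps / (4 * (1 + eps)) < beta).

Lemma solution_is_derive_V1 e1 e2 t : is_solution l1 l2 us eps beta e1 e2 -> 0 < t ->
  is_derive (fun t => V1 l1 l2 eps (e1 t) (e2 t)) t (V1_dot l1 l2 us eps beta (e1 t) (e2 t)).
Proof.
  intros [Hd _] Ht. destruct (Hd t Ht) as [H1 H2]. apply is_derive_V1_comp; auto.
Qed.

Lemma solution_right_continuous0_V1 e1 e2 : is_solution l1 l2 us eps beta e1 e2 ->
  right_continuous0 (fun t => V1 l1 l2 eps (e1 t) (e2 t)).
Proof. intros [_ [H1 H2]]. apply right_continuous0_V1; auto. Qed.

Lemma solution_V1_nonincreasing e1 e2 s t : is_solution l1 l2 us eps beta e1 e2 ->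
  0 <= s <= t -> V1 l1 l2 eps (e1 t) (e2 t) <= V1 l1 l2 eps (e1 s) (e2 s).
Proof.
  intros Hs Hst. destruct (Req_dec s 0) as [-> | Hs0].
  - apply (nonincreasing_of_derive_nonpos (fun t => V1 l1 l2 eps (e1 t) (e2 t))
             (fun t => V1_dot l1 l2 us eps beta (e1 t) (e2 t))); try lra.
    + intros u Hu. apply solution_is_derive_V1; auto.
    + intros u _. apply V1_dot_nonpos; auto.
    + apply solution_right_continuous0_V1, Hs.
  - apply (le_of_derive_nonpos (fun t => V1 l1 l2 eps (e1 t) (e2 t))
             (fun t => V1_dot l1 l2 us eps beta (e1 t) (e2 t))); try lra.
    + intros u Hu. apply solution_is_derive_V1; auto; lra.
    + intros u _. apply V1_dot_nonpos; auto.
Qed.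

Definition truncated_f1 c M x1 x2 :=
  cutoff c (V1 l1 l2 eps (clamp M x1) (clamp M x2))
  * f1 l1 l2 us eps beta (clamp M x1) (clamp M x2).
Definition truncated_f2 c M x1 x2 :=
  cutoff c (V1 l1 l2 eps (clamp M x1) (clamp M x2))
  * f2 l1 l2 us eps beta (clamp M x1) (clamp M x2).

Lemma bounded_lipschitz2_truncated c M : 0 <= M ->
  bounded_lipschitz2 (truncated_f1 c M) /\ bounded_lipschitz2 (truncated_f2 c M).
Proof.
  intros HM.
  split; unfold truncated_f1, truncated_f2, V1, Phi1, Phi2, f1, f2, ufb, phi1, phi2;
    repeat first
      [ apply bounded_lipschitz2_cutoff | apply bounded_lipschitz2_mult
      | apply bounded_lipschitz2_minus | apply bounded_lipschitz2_plus
      | apply bounded_lipschitz2_exp | apply bounded_lipschitz2_opp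
      | apply (bounded_lipschitz2_clamp_fst _ HM) | apply (bounded_lipschitz2_clamp_snd _ HM)
      | apply bounded_lipschitz2_const ].
Qed.

Lemma V1_clamp_ge_outside c x1 x2 : 0 <= c ->
  ~ (Rabs x1 <= 2 + l1 * c + c / l2 /\ Rabs x2 <= 2 + l1 * c + c / l2) ->
  c <= V1 l1 l2 eps (clamp (2 + l1 * c + c / l2) x1) (clamp (2 + l1 * c + c / l2) x2).
Proof.
  intros Hc Hout. set (M := 2 + l1 * c + c / l2) in *.
  assert (0 <= l1 * c) by (apply Rmult_le_pos; lra).
  assert (0 <= c / l2) by (apply Rdiv_le_0_compat; lra).
  destruct (Rlt_or_le (V1 l1 l2 eps (clamp M x1) (clamp M x2)) c) as [Hlt | Hle]; auto.
  destruct (V1_sublevel_bounded l1 l2 eps Hl1 Hl2 Heps c _ _ (Rlt_le _ _ Hlt)) as [B1 B2].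
  exfalso. apply Hout.
  destruct (Rle_or_lt (Rabs x1) M) as [P1 | P1];
    [| rewrite (Rabs_clamp_out M x1) in B1; unfold M in *; lra].
  destruct (Rle_or_lt (Rabs x2) M) as [P2 | P2];
    [| rewrite (Rabs_clamp_out M x2) in B2; unfold M in *; lra].
  auto.
Qed.

Lemma truncated_V1_dot_nonpos c x1 x2 : 0 <= c ->
  let M := 2 + l1 * c + c / l2 in
  phi1 l1 x1 * truncated_f1 c M x1 x2 + (1 + eps) * (phi2 l2 x2 * truncated_f2 c M x1 x2) <= 0.
Proof.
  intros Hc M. unfold truncated_f1, truncated_f2.
  destruct (classic (Rabs x1 <= M /\ Rabs x2 <= M)) as [[P1 P2] | Pout].
  - rewrite (clamp_id M x1 P1), (clamp_id M x2 P2).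
    pose proof (V1_dot_nonpos l1 l2 us eps beta Heps Hbeta x1 x2) as Hdot. unfold V1_dot in Hdot.
    pose proof (cutoff_nonneg c (V1 l1 l2 eps x1 x2)).
    set (w := cutoff c (V1 l1 l2 eps x1 x2)) in *. nra.
  - pose proof (V1_clamp_ge_outside c x1 x2 Hc Pout) as Hge. fold M in Hge.
    rewrite (cutoff_zero c _ Hge). lra.
Qed.

(* The field is globally Lipschitz only after truncation; the truncation is invisible along
   the solution because V1 does not increase. *)
Lemma closed_loop_solution_exists a b :
  exists e1 e2, is_solution l1 l2 us eps beta e1 e2 /\ e1 0 = a /\ e2 0 = b.
Proof.
  set (V0 := V1 l1 l2 eps a b). set (c := V0 + 2). set (M := 2 + l1 * c + c / l2).
  assert (HV0 : 0 <= V0) by (apply V1_nonneg; auto).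
  assert (0 <= l1 * c) by (apply Rmult_le_pos; unfold c; lra).
  assert (0 <= c / l2) by (apply Rdiv_le_0_compat; unfold c; lra).
  assert (HM : 0 <= M) by (unfold M; lra).
  destruct (bounded_lipschitz2_truncated c M HM) as [B1 B2].
  destruct (bounded_lipschitz2_common _ _ B1 B2) as [L [B [HL [HB [Hl1' [Hl2' [Hb1 Hb2]]]]]]].
  destruct (picard_solution _ _ L B a b HL HB Hl1' Hl2' Hb1 Hb2)
    as [x1 [x2 [X1 [X2 [R1 [R2 Dx]]]]]].
  assert (Hdecr : forall t, 0 <= t -> V1 l1 l2 eps (x1 t) (x2 t) <= V0).
  { intros t Ht. unfold V0. rewrite <- X1, <- X2.
    apply (nonincreasing_of_derive_nonpos (fun t => V1 l1 l2 eps (x1 t) (x2 t))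
      (fun t => phi1 l1 (x1 t) * truncated_f1 c M (x1 t) (x2 t)
                + (1 + eps) * (phi2 l2 (x2 t) * truncated_f2 c M (x1 t) (x2 t)))); auto.
    - intros s Hs. destruct (Dx s Hs). apply is_derive_V1_comp; auto.
    - intros s _. apply truncated_V1_dot_nonpos. unfold c; lra.
    - apply right_continuous0_V1; auto. }
  assert (Htrunc : forall t, 0 <= t ->
            truncated_f1 c M (x1 t) (x2 t) = f1 l1 l2 us eps beta (x1 t) (x2 t) /\
            truncated_f2 c M (x1 t) (x2 t) = f2 l1 l2 us eps beta (x1 t) (x2 t)).
  { intros t Ht. specialize (Hdecr t Ht).
    destruct (V1_sublevel_bounded l1 l2 eps Hl1 Hl2 Heps c (x1 t) (x2 t) ltac:(unfold c; lra))
      as [P1 P2].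
    unfold truncated_f1, truncated_f2.
    rewrite (clamp_id M (x1 t)), (clamp_id M (x2 t)), cutoff_one by (unfold M, c in *; lra).
    split; ring. }
  exists x1, x2. split; [| auto]. split; [| auto].
  intros t Ht. destruct (Dx t Ht) as [D1 D2]. destruct (Htrunc t ltac:(lra)) as [<- <-]. auto.
Qed.

End ClosedLoop.

Section Stability.

Variables (l1 l2 us eps beta : R).
Hypotheses (Hl1 : 0 < l1) (Hl2 : 0 < l2) (Heps : 0 < eps) (Hbeta : eps / (4 * (1 + eps)) < beta).

Lemma closed_loop_stable r : 0 < r -> exists d, 0 < d /\
  forall e1 e2, is_solution l1 l2 us eps beta e1 e2 ->
    norm2 (e1 0) (e2 0) < d -> forall t, 0 <= t -> norm2 (e1 t) (e2 t) < r.
Proof.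
  intros Hr.
  assert (Hrho : 0 < Rmin 1 (r / 2) <= 1) by (split; [apply Rmin_case; lra | apply Rmin_l]).
  pose proof (Rmin_r 1 (r / 2)).
  destruct (V1_small_bounds l1 l2 eps Hl1 Hl2 Heps (Rmin 1 (r / 2)) Hrho) as [delta [Hd Hsmall]].
  destruct (V1_small_near0 l1 l2 eps Hl1 Hl2 Heps delta Hd) as [d [Hd1 Hnear]].
  exists d. split; [lra |]. intros e1 e2 Hs Hn t Ht.
  pose proof (Rabs_le_norm2_l (e1 0) (e2 0)). pose proof (Rabs_le_norm2_r (e1 0) (e2 0)).
  pose proof (Hnear (e1 0) (e2 0) ltac:(lra) ltac:(lra)).
  pose proof (solution_V1_nonincreasing l1 l2 us eps beta Heps Hbeta e1 e2 0 t Hs ltac:(lra)).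
  destruct (Hsmall (e1 t) (e2 t) ltac:(lra)) as [P1 P2].
  apply norm2_lt; lra.
Qed.

Lemma phi_sq_ge_off_sublevel delta : 0 < delta ->
  exists c, 0 < c /\ forall x1 x2,
    delta <= V1 l1 l2 eps x1 x2 -> c <= phi1 l1 x1 ^ 2 + phi2 l2 x2 ^ 2.
Proof.
  intros Hd. destruct (V1_small_near0 l1 l2 eps Hl1 Hl2 Heps delta Hd) as [d [Hd1 Hnear]].
  assert (Hed : 0 < 1 - exp (- d))
    by (pose proof (exp_increasing (- d) 0 ltac:(lra)); rewrite exp_0 in *; lra).
  exists (Rmin (((1 - exp (- d)) / l1) ^ 2) ((l2 * (1 - exp (- d))) ^ 2)). split.
  { apply Rmin_case; apply pow_lt; [apply Rdiv_lt_0_compat | apply Rmult_lt_0_compat]; lra. }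
  intros x1 x2 Hv. apply phi_sq_ge_far; try lra.
  destruct (Rlt_or_le (Rabs x1) d) as [P1 | P1]; [| auto].
  destruct (Rlt_or_le (Rabs x2) d) as [P2 | P2]; [| auto].
  specialize (Hnear x1 x2 P1 P2). lra.
Qed.

(* While V1 >= delta, V1 decreases at a rate bounded away from 0, so it cannot stay there. *)
Lemma solution_V1_eventually_lt e1 e2 delta : is_solution l1 l2 us eps beta e1 e2 -> 0 < delta ->
  exists t0, 0 <= t0 /\ V1 l1 l2 eps (e1 t0) (e2 t0) < delta.
Proof.
  intros Hs Hd. apply NNPP. intros Hnot.
  assert (Hall : forall t, 0 <= t -> delta <= V1 l1 l2 eps (e1 t) (e2 t)).
  { intros t Ht. apply Rnot_lt_le. intros Hlt. apply Hnot. exists t; auto. }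
  destruct (phi_sq_ge_off_sublevel delta Hd) as [c [Hc Hphi]].
  destruct (V1_dot_le_phi_sq l1 l2 us eps beta Heps Hbeta) as [mu [Hmu Hdot]].
  set (W := fun t => V1 l1 l2 eps (e1 t) (e2 t) + mu * c * t).
  assert (HW : forall t, 0 <= t -> W t <= W 0).
  { apply (nonincreasing_of_derive_nonpos W
             (fun t => V1_dot l1 l2 us eps beta (e1 t) (e2 t) + mu * c)).
    - intros t Ht. apply (is_derive_plus _ (fun t => mu * c * t) t).
      + apply solution_is_derive_V1; auto.
      + auto_derive; auto. ring.
    - intros t Ht. specialize (Hdot (e1 t) (e2 t)). specialize (Hphi _ _ (Hall t ltac:(lra))). nra.
    - apply right_continuous0_plus; [apply (solution_right_continuous0_V1 l1 l2 us eps beta), Hs |].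
      apply continuous_right_continuous0, (ex_derive_continuous (V := R_NormedModule)).
      auto_derive. auto. }
  set (T := (V1 l1 l2 eps (e1 0) (e2 0) + 1) / (mu * c)).
  assert (Hmc : 0 < mu * c) by nra.
  pose proof (V1_nonneg l1 l2 eps Hl1 Hl2 Heps (e1 0) (e2 0)).
  pose proof (V1_nonneg l1 l2 eps Hl1 Hl2 Heps (e1 T) (e2 T)).
  assert (HT : 0 <= T) by (apply Rdiv_le_0_compat; lra).
  specialize (HW T HT). unfold W in HW.
  replace (mu * c * T) with (V1 l1 l2 eps (e1 0) (e2 0) + 1) in HW by (unfold T; field; lra).
  lra.
Qed.

Lemma closed_loop_converges e1 e2 : is_solution l1 l2 us eps beta e1 e2 ->
  is_lim (fun t => norm2 (e1 t) (e2 t)) p_infty 0.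
Proof.
  intros Hs. unfold is_lim. apply (proj2 (filterlim_locally _ _)). intros [r Hr].
  assert (Hrho : 0 < Rmin 1 (r / 2) <= 1) by (split; [apply Rmin_case; lra | apply Rmin_l]).
  pose proof (Rmin_r 1 (r / 2)).
  destruct (V1_small_bounds l1 l2 eps Hl1 Hl2 Heps (Rmin 1 (r / 2)) Hrho) as [delta [Hd Hsmall]].
  destruct (solution_V1_eventually_lt e1 e2 delta Hs Hd) as [t0 [Ht0 Hlt]].
  exists t0. intros t Ht.
  pose proof (solution_V1_nonincreasing l1 l2 us eps beta Heps Hbeta e1 e2 t0 t Hs ltac:(lra)).
  destruct (Hsmall (e1 t) (e2 t) ltac:(lra)) as [P1 P2].
  change (Rabs (norm2 (e1 t) (e2 t) - 0) < r).
  rewrite Rminus_0_r, Rabs_right by apply Rle_ge, sqrt_pos.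
  apply norm2_lt; lra.
Qed.

Lemma V1_dot_le_neg_V1_near0 :
  exists k, 0 < k /\ forall x1 x2, Rabs x1 <= 1 -> Rabs x2 <= 1 ->
    V1_dot l1 l2 us eps beta x1 x2 <= - k * V1 l1 l2 eps x1 x2.
Proof.
  destruct (V1_dot_le_phi_sq l1 l2 us eps beta Heps Hbeta) as [mu [Hmu Hdot]].
  set (Cphi := Rmin ((exp (-1) / l1) ^ 2) ((l2 * exp (-1)) ^ 2)).
  pose proof (V1_quad_const_pos l1 l2 eps Hl1 Hl2 Heps) as HCV.
  set (CV := exp 1 / l1 + (1 + eps) * (l2 * exp 1)) in *.
  pose proof (exp_pos (-1)).
  assert (HCphi : 0 < Cphi)
    by (apply Rmin_case; apply pow_lt; [apply Rdiv_lt_0_compat | apply Rmult_lt_0_compat]; lra).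
  exists (mu * Cphi / CV). split; [apply Rdiv_lt_0_compat; nra |].
  intros x1 x2 H1 H2.
  pose proof (phi_sq_ge_quad l1 l2 x1 x2 Hl1 Hl2 H1 H2) as Hphi. fold Cphi in Hphi.
  pose proof (V1_le_quad l1 l2 eps Hl1 Hl2 Heps x1 x2 H1 H2) as HV. fold CV in HV.
  assert (V1 l1 l2 eps x1 x2 / CV <= x1 ^ 2 + x2 ^ 2)
    by (apply (Rmult_le_reg_r CV); [lra |]; unfold Rdiv; rewrite Rmult_assoc, Rinv_l; lra).
  specialize (Hdot x1 x2).
  replace (- (mu * Cphi / CV) * V1 l1 l2 eps x1 x2) with (- (mu * Cphi) * (V1 l1 l2 eps x1 x2 / CV))
    by (field; lra).
  assert (mu * Cphi * (V1 l1 l2 eps x1 x2 / CV) <= mu * Cphi * (x1 ^ 2 + x2 ^ 2))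
    by (apply Rmult_le_compat_l; nra).
  nra.
Qed.

Lemma solution_V1_exp_decay :
  exists d k, 0 < d /\ 0 < k /\ forall e1 e2, is_solution l1 l2 us eps beta e1 e2 ->
    V1 l1 l2 eps (e1 0) (e2 0) < d -> forall t, 0 <= t ->
      V1 l1 l2 eps (e1 t) (e2 t) <= V1 l1 l2 eps (e1 0) (e2 0) * exp (- k * t).
Proof.
  destruct (V1_small_bounds l1 l2 eps Hl1 Hl2 Heps 1 ltac:(lra)) as [d [Hd Hsmall]].
  destruct V1_dot_le_neg_V1_near0 as [k [Hk Hdot]].
  exists d, k. split; [| split]; auto. intros e1 e2 Hs H0.
  apply (exp_decay_of_derive_le (fun t => V1 l1 l2 eps (e1 t) (e2 t))
           (fun t => V1_dot l1 l2 us eps beta (e1 t) (e2 t))).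
  - intros t Ht. apply solution_is_derive_V1; auto.
  - intros t Ht.
    pose proof (solution_V1_nonincreasing l1 l2 us eps beta Heps Hbeta e1 e2 0 t Hs ltac:(lra)).
    destruct (Hsmall (e1 t) (e2 t) ltac:(lra)) as [P1 P2]. apply Hdot; lra.
  - apply (solution_right_continuous0_V1 l1 l2 us eps beta), Hs.
Qed.

Lemma closed_loop_LES : LES l1 l2 us eps beta.
Proof.
  destruct solution_V1_exp_decay as [d1 [k [Hd1 [Hk Hdecay]]]].
  destruct (V1_small_bounds l1 l2 eps Hl1 Hl2 Heps 1 ltac:(lra)) as [d2 [Hd2 Hsmall]].
  destruct (V1_small_near0 l1 l2 eps Hl1 Hl2 Heps (Rmin d1 d2) ltac:(apply Rmin_case; lra))
    as [d [Hd Hnear]].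
  pose proof (Rmin_l d1 d2). pose proof (Rmin_r d1 d2).
  destruct (norm2_le_of_V1_le l1 l2 eps Hl1 Hl2 Heps) as [c [Hc Hnorm]].
  exists d, c, (k / 2). split; [lra | split; [lra | split; [lra |]]].
  intros e1 e2 Hs Hn t Ht.
  pose proof (Rabs_le_norm2_l (e1 0) (e2 0)). pose proof (Rabs_le_norm2_r (e1 0) (e2 0)).
  pose proof (Hnear (e1 0) (e2 0) ltac:(lra) ltac:(lra)) as HV0.
  pose proof (Hdecay e1 e2 Hs ltac:(lra) t Ht) as HVt.
  pose proof (solution_V1_nonincreasing l1 l2 us eps beta Heps Hbeta e1 e2 0 t Hs ltac:(lra)).
  destruct (Hsmall (e1 t) (e2 t) ltac:(lra)) as [P1 P2].
  replace (exp (- k * t)) with (exp (- (k / 2) * t) ^ 2) in HVt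
    by (simpl; rewrite Rmult_1_r, <- exp_plus; f_equal; field).
  apply Hnorm; try lra. left; apply exp_pos.
Qed.

Lemma Rabs_ufb_le x1 x2 R : Rabs x1 <= R -> Rabs x2 <= R ->
  Rabs (ufb l1 l2 us eps beta x1 x2)
  <= Rabs us + Rabs beta * ((1 + exp R) / l1 + (1 + eps) * (l2 * (exp R + 1))).
Proof.
  intros H1 H2. apply Rabs_le_between in H1, H2.
  pose proof (exp_le_exp (- x1) R ltac:(lra)). pose proof (exp_le_exp x2 R ltac:(lra)).
  pose proof (exp_pos (- x1)). pose proof (exp_pos x2).
  assert (F1 : Rabs (phi1 l1 x1) <= (1 + exp R) / l1).
  { unfold phi1. rewrite Rabs_mult, Rabs_inv, (Rabs_right l1), Rmult_comm by lra.
    apply Rmult_le_compat_r; [left; apply Rinv_0_lt_compat; lra |].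
    apply Rabs_le. lra. }
  assert (F2 : Rabs (phi2 l2 x2) <= l2 * (exp R + 1)).
  { unfold phi2. rewrite Rabs_mult, (Rabs_right l2) by lra.
    apply Rmult_le_compat_l; [lra |]. apply Rabs_le. lra. }
  unfold ufb. eapply Rle_trans; [apply Rabs_triang |]. apply Rplus_le_compat_l.
  rewrite Rabs_mult. apply Rmult_le_compat_l; [apply Rabs_pos |].
  eapply Rle_trans; [apply Rabs_triang |]. rewrite Rabs_mult, (Rabs_right (1 + eps)) by lra.
  apply Rplus_le_compat; [lra | apply Rmult_le_compat_l; lra].
Qed.

Lemma closed_loop_control_bounded e1 e2 : is_solution l1 l2 us eps beta e1 e2 ->
  exists M, forall t, 0 <= t -> Rabs (ufb l1 l2 us eps beta (e1 t) (e2 t)) <= M.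
Proof.
  intros Hs. set (V0 := V1 l1 l2 eps (e1 0) (e2 0)).
  assert (0 <= V0) by (apply V1_nonneg; auto).
  assert (0 <= l1 * V0) by (apply Rmult_le_pos; lra).
  assert (0 <= V0 / l2) by (apply Rdiv_le_0_compat; lra).
  set (R := 1 + l1 * V0 + V0 / l2).
  eexists. intros t Ht. apply (Rabs_ufb_le _ _ R).
  all: destruct (V1_sublevel_bounded l1 l2 eps Hl1 Hl2 Heps V0 (e1 t) (e2 t)) as [B1 B2];
    [apply (solution_V1_nonincreasing l1 l2 us eps beta Heps Hbeta e1 e2 0 t Hs); lra |];
    unfold R; lra.
Qed.

Lemma closed_loop_control_positive r :
  (forall x1 x2, V1 l1 l2 eps x1 x2 <= r -> 0 < ufb l1 l2 us eps beta x1 x2) ->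
  forall e1 e2, is_solution l1 l2 us eps beta e1 e2 ->
    V1 l1 l2 eps (e1 0) (e2 0) <= r ->
    forall t, 0 <= t -> 0 < ufb l1 l2 us eps beta (e1 t) (e2 t).
Proof.
  intros Hpos e1 e2 Hs H0 t Ht. apply Hpos.
  pose proof (solution_V1_nonincreasing l1 l2 us eps beta Heps Hbeta e1 e2 0 t Hs ltac:(lra)).
  lra.
Qed.

End Stability.

Theorem theorem1 (l1 l2 us eps beta : R) :
  0 < l1 -> 0 < l2 -> 0 < us -> 0 < eps ->
  eps / (4 * (1 + eps)) < beta ->
  GAS l1 l2 us eps beta /\
  LES l1 l2 us eps beta /\
  (forall e1 e2, is_solution l1 l2 us eps beta e1 e2 ->
     exists M, forall t, 0 <= t ->
       Rabs (ufb l1 l2 us eps beta (e1 t) (e2 t)) <= M) /\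
  (forall r, 0 < r ->
     (forall x1 x2, V1 l1 l2 eps x1 x2 <= r -> 0 < ufb l1 l2 us eps beta x1 x2) ->
     forall e1 e2, is_solution l1 l2 us eps beta e1 e2 ->
       V1 l1 l2 eps (e1 0) (e2 0) <= r ->
       forall t, 0 <= t -> 0 < ufb l1 l2 us eps beta (e1 t) (e2 t)).
Proof.
  intros Hl1 Hl2 Hus Heps Hbeta.
  split; [split; [| split] |].
  - intros a b. apply closed_loop_solution_exists; auto.
  - apply closed_loop_stable; auto.
  - apply closed_loop_converges; auto.
  - split; [apply closed_loop_LES; auto |].
    split; [intros; apply closed_loop_control_bounded; auto |].
    intros r _. apply closed_loop_control_positive; auto.
Qed.
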